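(* Every nonzero proper ideal $\mathcal I$ of $C_{an}(S^1;\mathbf{R})$ is of the form $\mathfrak m_{p_1}^{a_1}\mathfrak m_{p_2}^{a_2}\cdots\mathfrak m_{p_n}^{a_n}$ for some points $p_1,\dots,p_n\in S^1$ and positive integers $a_1,\dots,a_n$. Specifically, $p_1,\dots,p_n$ are the common zeros of the elements of $\mathcal I$ and $a_k$ is the minimum, over nonzero $f\in\mathcal I$, of the order of vanishing of $f$ at $p_k$.
   Context: $S^1$ is identified with $\mathbf{R}/2\pi\mathbf{Z}$. $C_{an}(S^1;\mathbf{R})$ is the ring (under pointwise operations) of real-valued real-analytic functions on $S^1$, i.e. $2\pi$-periodic real-analytic functions $\mathbf{R}\to\mathbf{R}$. For $p\in S^1$, $\mathfrak m_p=\{f\in C_{an}(S^1;\mathbf{R}): f(p)=0\}$. *)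

From Stdlib Require Import Reals List.
Open Scope R_scope.

Definition real_analytic (f : R -> R) : Prop :=
  forall x0 : R, exists r : R, 0 < r /\ exists a : nat -> R,
    forall x : R, Rabs (x - x0) < r -> Pser a (x - x0) (f x).

(* Elements of C_an(S^1;R): 2*PI-periodic real-analytic functions R -> R. *)
Definition Can (f : R -> R) : Prop :=
  real_analytic f /\ forall x : R, f (x + 2 * PI) = f x.

(* Points of S^1 = R / 2 PI Z, represented by their representative in [0, 2 PI). *)
Definition S1pt (p : R) : Prop := 0 <= p < 2 * PI.

Definition is_ideal (I : (R -> R) -> Prop) : Prop :=
  (forall f, I f -> Can f) /\
  I (fun _ => 0) /\
  (forall f g, I f -> I g -> I (fun x => f x + g x)) /\
  (forall g f, Can g -> I f -> I (fun x => g x * f x)).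

Definition nonzero_fun (f : R -> R) : Prop := exists x, f x <> 0.

Definition mideal (p : R) (f : R -> R) : Prop := Can f /\ f p = 0.

Inductive idmul (I J : (R -> R) -> Prop) : (R -> R) -> Prop :=
| idmul0 : idmul I J (fun _ => 0)
| idmul_add : forall f g h, I f -> J g -> idmul I J h ->
    idmul I J (fun x => f x * g x + h x).

Fixpoint idpow (I : (R -> R) -> Prop) (a : nat) : (R -> R) -> Prop :=
  match a with
  | O => Can
  | S a' => idmul I (idpow I a')
  end.

Definition mprod (l : list (R * nat)) : (R -> R) -> Prop :=
  fold_right (fun pa J => idmul (idpow (mideal (fst pa)) (snd pa)) J) Can l.

Definition vanish_order (f : R -> R) (p : R) (n : nat) : Prop :=
  exists r : R, 0 < r /\ exists a : nat -> R,
    (forall x : R, Rabs (x - p) < r -> Pser a (x - p) (f x)) /\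
    (forall k, (k < n)%nat -> a k = 0) /\ a n <> 0.

From Stdlib Require Import Reals List Lra Lia Arith ZArith Classical ClassicalEpsilon
  FunctionalExtensionality PropExtensionality.
From Coquelicot Require Import Coquelicot.
Open Scope R_scope.

(* A nonzero element of C_an has isolated zeros, hence (by compactness of the circle)
   finitely many; so the common zeros p_1, ..., p_n of I are finite, and the order a_k of
   I at p_k is attained by some element of I.  Let J be the ideal of all g with
   ord_{p_k} g >= a_k for every k.

   J is the product of the m_{p_k}^{a_k}: a function g of order >= a+1 at p equals
   sin(x-p) c + (1 - cos(x-p)) g/2 with ord_p c >= a, which gives m_p^a = {ord_p >= a} by
   induction; and for distinct points the powers of the versines 1 - cos(x-p) have no common
   zero, so they generate the unit ideal and the product of the ideals is their
   intersection.

   I = J: take finitely many f_j in I with no common zeros besides the p_k + 2 pi Z, among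
   them one of order exactly a_k at each p_k.  Then q = sum f_j^2 lies in I and has order
   exactly 2 a_k at p_k, so for g in J every g f_j / q extends analytically, and
   g = sum_j (g f_j / q) f_j lies in I.  Analytic division rests on the inversion of
   power series with nonzero constant term. *)

Definition ps_ball (F : R -> R) (x0 r : R) : Prop :=
  0 < r /\ exists d : nat -> R, Rbar_le r (CV_radius d) /\
    forall x, Rabs (x - x0) < r -> F x = PSeries d (x - x0).

Lemma ps_ball_pos F x0 r : ps_ball F x0 r -> 0 < r.
Proof. intros [H _]. exact H. Qed.

Lemma Rabs_center_lt x0 r : 0 < r -> Rabs (x0 - x0) < r.
Proof. intro Hr. rewrite Rminus_diag, Rabs_R0. exact Hr. Qed.

Lemma is_lim_seq_0_bounded (u : nat -> R) :
  is_lim_seq u 0 -> exists M, forall n, Rabs (u n) <= M.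
Proof.
  intro H. apply is_lim_seq_Reals, cv_cvabs in H.
  assert (Hc : Cauchy_crit (fun i => Rabs (u i))) by (apply CV_Cauchy; exists (Rabs 0); exact H).
  destruct (cauchy_bound _ Hc) as [M HM]. exists M. intro n. apply HM. exists n. reflexivity.
Qed.

Lemma pseries_coef_bounded d t : ex_pseries d t -> exists M, forall n, Rabs (d n * t ^ n) <= M.
Proof.
  intros [l Hl]. apply is_lim_seq_0_bounded, ex_series_lim_0.
  exists l. exact (proj1 (is_pseries_R _ _ _) Hl).
Qed.

Lemma CV_radius_ge d r : 0 < r ->
  (forall t, Rabs t < r -> ex_pseries d t) -> Rbar_le r (CV_radius d).
Proof.
  intros Hr H.
  pose proof (CV_radius_bounded d) as [Hub _].
  pose proof (CV_radius_ge_0 d) as H0.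
  destruct (CV_radius d) as [c| |] eqn:Hc; simpl in *; try tauto.
  destruct (Rle_dec r c) as [h|h]; [exact h|exfalso].
  set (rho := (c + r) / 2).
  assert (Hrho : Rabs rho < r) by (unfold rho; rewrite Rabs_pos_eq; lra).
  assert (Hle : Rbar_le rho c) by exact (Hub _ (pseries_coef_bounded _ _ (H rho Hrho))).
  simpl in Hle. unfold rho in Hle. lra.
Qed.

Lemma Rbar_lt_radius t r (c : Rbar) : Rabs t < r -> Rbar_le r c -> Rbar_lt (Rabs t) c.
Proof. intros H1 H2. eapply Rbar_lt_le_trans; [|exact H2]. exact H1. Qed.

Lemma ps_ball_inside x0 r d x : Rabs (x - x0) < r -> Rbar_le r (CV_radius d) ->
  ex_pseries d (x - x0).
Proof. intros Hx Hd. apply CV_radius_inside. exact (Rbar_lt_radius _ _ _ Hx Hd). Qed.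

Definition ps_one (n : nat) : R := match n with O => 1 | _ => 0 end.

Lemma CV_radius_ps_one : CV_radius ps_one = p_infty.
Proof.
  rewrite <- CV_radius_decr_1, (CV_radius_ext _ (fun _ => 0)); [apply CV_radius_const_0|].
  intro n. reflexivity.
Qed.

Lemma PSeries_ps_one t : PSeries ps_one t = 1.
Proof.
  rewrite PSeries_decr_1.
  - rewrite (PSeries_ext _ (fun _ => 0)), PSeries_const_0; [simpl; ring|]. intro n. reflexivity.
  - apply CV_radius_inside. rewrite CV_radius_ps_one. exact I.
Qed.

Lemma ps_ball_const c x0 r : 0 < r -> ps_ball (fun _ => c) x0 r.
Proof.
  intro Hr. split; [exact Hr|]. exists (PS_scal c ps_one). split.
  - destruct (Req_dec c 0) as [->|hc].
    + rewrite (CV_radius_ext _ (fun _ => 0)), CV_radius_const_0; [exact I|].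
      intro n. unfold PS_scal. simpl. change (0 * ps_one n = 0). ring.
    + rewrite CV_radius_scal, CV_radius_ps_one by exact hc. exact I.
  - intros x _. rewrite PSeries_scal, PSeries_ps_one. ring.
Qed.

Lemma ps_ball_id x0 r : 0 < r -> ps_ball (fun x => x - x0) x0 r.
Proof.
  intro Hr. split; [exact Hr|]. exists (PS_incr_1 ps_one). split.
  - rewrite CV_radius_incr_1, CV_radius_ps_one. exact I.
  - intros x _. rewrite PSeries_incr_1, PSeries_ps_one. ring.
Qed.

Lemma ps_ball_ext F G x0 r : ps_ball F x0 r ->
  (forall x, Rabs (x - x0) < r -> F x = G x) -> ps_ball G x0 r.
Proof.
  intros [Hr [d [Hd HF]]] H. split; [exact Hr|]. exists d. split; [exact Hd|].
  intros x Hx. rewrite <- H by exact Hx. exact (HF x Hx).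
Qed.

Lemma ps_ball_shrink F x0 r r' : ps_ball F x0 r -> 0 < r' -> r' <= r -> ps_ball F x0 r'.
Proof.
  intros [Hr [d [Hd HF]]] H1 H2. split; [exact H1|]. exists d. split.
  - eapply Rbar_le_trans; [|exact Hd]. exact H2.
  - intros x Hx. apply HF. lra.
Qed.

Lemma ps_ball_common F G x0 r1 r2 : ps_ball F x0 r1 -> ps_ball G x0 r2 ->
  exists r, r <= r1 /\ r <= r2 /\ ps_ball F x0 r /\ ps_ball G x0 r.
Proof.
  intros H1 H2. pose proof (ps_ball_pos _ _ _ H1). pose proof (ps_ball_pos _ _ _ H2).
  assert (0 < Rmin r1 r2) by (apply Rmin_pos; assumption).
  exists (Rmin r1 r2). split; [apply Rmin_l|]. split; [apply Rmin_r|].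
  split; eapply ps_ball_shrink; eauto; [apply Rmin_l|apply Rmin_r].
Qed.

Lemma ps_ball_plus F G x0 r : ps_ball F x0 r -> ps_ball G x0 r ->
  ps_ball (fun x => F x + G x) x0 r.
Proof.
  intros [Hr [d1 [Hd1 HF]]] [_ [d2 [Hd2 HG]]]. split; [exact Hr|].
  exists (PS_plus d1 d2). split.
  - eapply Rbar_le_trans; [|apply CV_radius_plus]. apply Rbar_min_case; assumption.
  - intros x Hx. rewrite PSeries_plus, HF, HG by eauto using ps_ball_inside. reflexivity.
Qed.

Lemma ps_ball_mult F G x0 r : ps_ball F x0 r -> ps_ball G x0 r ->
  ps_ball (fun x => F x * G x) x0 r.
Proof.
  intros [Hr [d1 [Hd1 HF]]] [_ [d2 [Hd2 HG]]]. split; [exact Hr|].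
  exists (PS_mult d1 d2). split.
  - apply CV_radius_ge; [exact Hr|]. intros t Ht.
    apply ex_pseries_mult; eapply Rbar_lt_radius; eassumption.
  - intros x Hx. rewrite PSeries_mult, HF, HG by eauto using Rbar_lt_radius. reflexivity.
Qed.

Lemma ps_ball_pow F x0 r n : ps_ball F x0 r -> ps_ball (fun x => F x ^ n) x0 r.
Proof.
  intro H. induction n as [|n IH].
  - exact (ps_ball_const 1 x0 r (ps_ball_pos _ _ _ H)).
  - exact (ps_ball_mult _ _ _ _ H IH).
Qed.

Lemma ps_ball_shift G p r c : ps_ball G p r -> ps_ball (fun x => G (x - c)) (p + c) r.
Proof.
  intros [Hr [d [Hd HG]]]. split; [exact Hr|]. exists d. split; [exact Hd|].
  intros x Hx. rewrite HG; [f_equal; ring|].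
  replace (x - c - p) with (x - (p + c)) by ring. exact Hx.
Qed.

Lemma ps_ball_Pser F x0 r a : 0 < r ->
  (forall x, Rabs (x - x0) < r -> Pser a (x - x0) (F x)) ->
  Rbar_le r (CV_radius a) /\ forall x, Rabs (x - x0) < r -> F x = PSeries a (x - x0).
Proof.
  intros Hr H. split.
  - apply CV_radius_ge; [exact Hr|]. intros t Ht. exists (F (x0 + t)).
    apply is_pseries_Reals. replace t with (x0 + t - x0) at 1 by ring. apply H.
    replace (x0 + t - x0) with t by ring. exact Ht.
  - intros x Hx. symmetry. apply is_pseries_unique, is_pseries_Reals, H, Hx.
Qed.

Lemma Pser_ps_ball F x0 (r : R) d : Rbar_le r (CV_radius d) ->
  (forall x, Rabs (x - x0) < r -> F x = PSeries d (x - x0)) ->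
  forall x, Rabs (x - x0) < r -> Pser d (x - x0) (F x).
Proof.
  intros Hd HF x Hx. rewrite HF by exact Hx.
  apply is_pseries_Reals. apply PSeries_correct. exact (ps_ball_inside _ _ _ _ Hx Hd).
Qed.

Lemma ps_ball_center F x0 r : ps_ball F x0 r -> exists d, Rbar_le r (CV_radius d) /\
  F x0 = d O /\ forall x, Rabs (x - x0) < r -> F x = PSeries d (x - x0).
Proof.
  intros [Hr [d [Hd HF]]]. exists d. repeat split; try assumption.
  rewrite HF, Rminus_diag by (apply Rabs_center_lt, Hr). apply PSeries_0.
Qed.

Lemma ps_ball_continuous F x0 r : ps_ball F x0 r -> continuity_pt F x0.
Proof.
  intros [Hr [d [Hd HF]]].
  assert (Hc : continuity_pt (fun x => PSeries d (x - x0)) x0).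
  { apply continuity_pt_comp with (f1 := fun x => x - x0).
    - apply continuity_pt_minus; [apply continuity_pt_id|].
      apply continuity_pt_const. intros ??. reflexivity.
    - apply PSeries_continuity. rewrite Rminus_diag, Rabs_R0.
      eapply Rbar_lt_le_trans; [|exact Hd]. exact Hr. }
  apply (continuity_pt_locally_ext (fun x => PSeries d (x - x0)) F r x0 Hr); [|exact Hc].
  intros x Hx. symmetry. apply HF. exact Hx.
Qed.

Lemma continuity_pt_near f x0 eps : continuity_pt f x0 -> 0 < eps ->
  exists delta, 0 < delta /\ forall x, Rabs (x - x0) < delta -> Rabs (f x - f x0) < eps.
Proof.
  intros Hc Heps. destruct (proj1 (continuity_pt_locally f x0) Hc (mkposreal eps Heps)) as [d Hd].
  exists d. split; [apply cond_pos|]. intros x Hx. exact (Hd x Hx).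
Qed.

Lemma ps_ball_nonzero_near G x0 r : ps_ball G x0 r -> G x0 <> 0 ->
  exists delta, 0 < delta /\ forall x, Rabs (x - x0) < delta -> G x <> 0.
Proof.
  intros HG H0.
  destruct (continuity_pt_near G x0 (Rabs (G x0)) (ps_ball_continuous _ _ _ HG)) as [d [Hd Hc]].
  { apply Rabs_pos_lt, H0. }
  exists d. split; [exact Hd|]. intros x Hx Hz. specialize (Hc x Hx).
  rewrite Hz, Rminus_0_l, Rabs_Ropp in Hc. lra.
Qed.

Lemma ps_ball_punctured_eq F H p r r' : ps_ball F p r -> ps_ball H p r' ->
  (exists e, 0 < e /\ forall x, 0 < Rabs (x - p) < e -> F x = H x) -> F p = H p.
Proof.
  intros HF HH [e [He Heq]].
  apply NNPP. intro hne. set (eps := Rabs (F p - H p) / 2).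
  assert (Heps : 0 < eps) by (apply Rdiv_lt_0_compat; [apply Rabs_pos_lt; lra|lra]).
  destruct (continuity_pt_near F p eps (ps_ball_continuous _ _ _ HF) Heps) as [d1 [Hd1 H1]].
  destruct (continuity_pt_near H p eps (ps_ball_continuous _ _ _ HH) Heps) as [d2 [Hd2 H2]].
  set (m := Rmin e (Rmin d1 d2)).
  assert (Hm : 0 < m) by (apply Rmin_pos; [|apply Rmin_pos]; assumption).
  assert (He1 := Rmin_l e (Rmin d1 d2)). assert (He2 := Rmin_r e (Rmin d1 d2)).
  assert (He3 := Rmin_l d1 d2). assert (He4 := Rmin_r d1 d2). fold m in He1, He2.
  assert (Hx : Rabs (p + m / 2 - p) = m / 2)
    by (replace (p + m / 2 - p) with (m / 2) by ring; apply Rabs_pos_eq; lra).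
  specialize (H1 (p + m / 2) ltac:(lra)). specialize (H2 (p + m / 2) ltac:(lra)).
  rewrite Heq in H1 by lra.
  assert (Rabs (F p - H p) <= Rabs (H (p + m / 2) - F p) + Rabs (H (p + m / 2) - H p)).
  { replace (F p - H p) with (- (H (p + m / 2) - F p) + (H (p + m / 2) - H p)) by ring.
    eapply Rle_trans; [apply Rabs_triang|]. rewrite Rabs_Ropp. lra. }
  unfold eps in *. lra.
Qed.

Lemma exists_least_nat (P : nat -> Prop) :
  (exists n, P n) -> exists n, P n /\ forall k, (k < n)%nat -> ~ P k.
Proof.
  intro Hex.
  destruct (dec_inh_nat_subset_has_unique_least_element P (fun n => classic (P n)) Hex)
    as [n [[Hn Hmin] _]].
  exists n. split; [exact Hn|]. intros k Hk HPk. specialize (Hmin k HPk). lia.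
Qed.

Lemma ps_ball_factor F x0 r d m : 0 < r -> Rbar_le r (CV_radius d) ->
  (forall x, Rabs (x - x0) < r -> F x = PSeries d (x - x0)) ->
  (forall k, (k < m)%nat -> d k = 0) ->
  exists G, ps_ball G x0 r /\ G x0 = d m /\
    forall x, Rabs (x - x0) < r -> F x = (x - x0) ^ m * G x.
Proof.
  intros Hr Hd HF Hz.
  exists (fun x => PSeries (PS_decr_n d m) (x - x0)). split; [|split].
  - split; [exact Hr|]. exists (PS_decr_n d m). split; [|intros; reflexivity].
    apply CV_radius_ge; [exact Hr|]. intros t Ht. apply ex_pseries_decr_n.
    + destruct (Req_dec t 0) as [->|ht]; [left; reflexivity|right].
      exists (/ t). change (/ t * t = 1). field. exact ht.
    + apply CV_radius_inside. eapply Rbar_lt_radius; eassumption.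
  - rewrite Rminus_diag, PSeries_0. unfold PS_decr_n. f_equal. lia.
  - intros x Hx. rewrite HF by exact Hx. apply PSeries_decr_n_aux. exact Hz.
Qed.

Lemma ps_ball_dichotomy F x0 r : ps_ball F x0 r ->
  (forall x, Rabs (x - x0) < r -> F x = 0) \/
  exists m G, ps_ball G x0 r /\ G x0 <> 0 /\
    forall x, Rabs (x - x0) < r -> F x = (x - x0) ^ m * G x.
Proof.
  intros [Hr [d [Hd HF]]].
  destruct (classic (exists k, d k <> 0)) as [Hex|Hno].
  - right. destruct (exists_least_nat _ Hex) as [m [Hm Hlt]].
    destruct (ps_ball_factor F x0 r d m Hr Hd HF) as [G [HG [HG0 HFG]]].
    { intros k Hk. apply NNPP. exact (Hlt k Hk). }
    exists m, G. rewrite HG0. auto.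
  - left. intros x Hx. rewrite HF by exact Hx.
    rewrite (PSeries_ext _ (fun _ => 0)); [apply PSeries_const_0|].
    intro n. apply NNPP. intro h. apply Hno. exists n. exact h.
Qed.

Fixpoint recip_upto (d : nat -> R) (n : nat) : nat -> R :=
  match n with
  | O => fun _ => / d O
  | S m => fun j => if Nat.leb j m then recip_upto d m j
      else - / d O * sum_f_R0 (fun k => d (S k) * recip_upto d m (m - k)%nat) m
  end.

(* Coefficients of the reciprocal power series, solving [PS_mult d (recip d) = ps_one]
   by forward substitution. *)
Definition recip (d : nat -> R) (n : nat) : R := recip_upto d n n.

Lemma recip_upto_stable d n j : (j <= n)%nat -> recip_upto d n j = recip d j.
Proof.
  induction n as [|n IH]; intro Hj.
  - replace j with O by lia. reflexivity.
  - destruct (Nat.eq_dec j (S n)) as [->|hne]; [reflexivity|].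
    simpl. replace (Nat.leb j n) with true by (symmetry; apply Nat.leb_le; lia).
    apply IH. lia.
Qed.

Lemma recip_S d m :
  recip d (S m) = - / d O * sum_f_R0 (fun k => d (S k) * recip d (m - k)%nat) m.
Proof.
  unfold recip at 1. cbn [recip_upto].
  replace (Nat.leb (S m) m) with false by (symmetry; apply Nat.leb_gt; lia).
  f_equal. apply sum_eq. intros i Hi. f_equal. apply recip_upto_stable. lia.
Qed.

Lemma PS_mult_recip d : d O <> 0 -> forall n, PS_mult d (recip d) n = ps_one n.
Proof.
  intros H0 [|n]; unfold PS_mult.
  - simpl. unfold recip. simpl. field. exact H0.
  - rewrite decomp_sum by lia. simpl pred. rewrite Nat.sub_0_r, recip_S. simpl ps_one.
    replace (sum_f_R0 (fun i => d (S i) * recip d (S n - S i)%nat) n)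
      with (sum_f_R0 (fun k => d (S k) * recip d (n - k)%nat) n)
      by (apply sum_eq; intros; reflexivity).
    field. exact H0.
Qed.

Lemma geom_sum_identity c al m :
  al * sum_f_R0 (fun k => c ^ S k * (c * (1 + al)) ^ (m - k)) m
  = (c * (1 + al)) ^ S m - c ^ S m.
Proof.
  induction m as [|m IH].
  - simpl. ring.
  - rewrite tech5, Nat.sub_diag, pow_O, Rmult_1_r.
    replace (sum_f_R0 (fun k => c ^ S k * (c * (1 + al)) ^ (S m - k)) m)
      with ((c * (1 + al)) * sum_f_R0 (fun k => c ^ S k * (c * (1 + al)) ^ (m - k)) m).
    + rewrite Rmult_plus_distr_l, <- Rmult_assoc, (Rmult_comm al), Rmult_assoc, IH.
      simpl. ring.
    + rewrite scal_sum. apply sum_eq. intros i Hi.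
      replace (S m - i)%nat with (S (m - i)) by lia. simpl. ring.
Qed.

Lemma recip_bound d K c : d O <> 0 -> 0 <= K -> 0 < c ->
  (forall n, Rabs (d n) <= K * c ^ n) ->
  forall n, Rabs (recip d n) <= (c * (1 + K / Rabs (d O))) ^ n / Rabs (d O).
Proof.
  intros H0 HK Hc Hd.
  set (s := Rabs (d O)). assert (Hs : 0 < s) by (apply Rabs_pos_lt; exact H0).
  set (al := K / s). assert (Hal : 0 <= al) by (apply Rdiv_le_0_compat; lra).
  set (B := c * (1 + al)). assert (HB : 0 < B) by (unfold B; nra).
  intro n. induction n as [n IH] using (well_founded_induction Wf_nat.lt_wf).
  destruct n as [|n].
  - unfold recip. simpl. rewrite Rabs_inv. fold s. lra.
  - rewrite recip_S, Rabs_mult, Rabs_Ropp, Rabs_inv. fold s.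
    assert (Hsum : Rabs (sum_f_R0 (fun k => d (S k) * recip d (n - k)%nat) n)
                   <= al * sum_f_R0 (fun k => c ^ S k * B ^ (n - k)) n).
    { eapply Rle_trans; [apply Rsum_abs|]. rewrite scal_sum.
      apply sum_Rle. intros k Hk. rewrite Rabs_mult.
      assert (Hk2 : Rabs (recip d (n - k)) <= B ^ (n - k) / s) by (apply IH; lia).
      assert (0 <= B ^ (n - k)) by (apply pow_le; lra).
      assert (0 <= c ^ S k) by (apply pow_le; lra).
      apply Rle_trans with ((K * c ^ S k) * (B ^ (n - k) / s)).
      + apply Rmult_le_compat; try apply Rabs_pos; auto.
      + unfold al. right. field. lra. }
    assert (0 <= c ^ S n) by (apply pow_le; lra).
    apply Rle_trans with (/ s * (al * sum_f_R0 (fun k => c ^ S k * B ^ (n - k)) n)).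
    + apply Rmult_le_compat_l; [apply Rlt_le, Rinv_0_lt_compat|]; assumption.
    + unfold B. rewrite geom_sum_identity. fold B. unfold Rdiv. rewrite Rmult_comm.
      apply Rmult_le_compat_r; [apply Rlt_le, Rinv_0_lt_compat; exact Hs|lra].
Qed.

Lemma pseries_coef_geometric d r : 0 < r -> Rbar_le r (CV_radius d) ->
  exists K c, 0 <= K /\ 0 < c /\ forall n, Rabs (d n) <= K * c ^ n.
Proof.
  intros Hr Hd.
  assert (Hrho : Rabs (r / 2) < r) by (rewrite Rabs_pos_eq; lra).
  assert (Hex : ex_pseries d (r / 2))
    by (apply CV_radius_inside; exact (Rbar_lt_radius _ _ _ Hrho Hd)).
  destruct (pseries_coef_bounded d (r / 2) Hex) as [M HM].
  exists (Rmax M 0), (/ (r / 2)). split; [apply Rmax_r|]. split; [apply Rinv_0_lt_compat; lra|].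
  intro n. assert (Hp : 0 < (r / 2) ^ n) by (apply pow_lt; lra).
  specialize (HM n). rewrite Rabs_mult, (Rabs_pos_eq ((r / 2) ^ n)) in HM by lra.
  rewrite pow_inv. apply Rmult_le_reg_r with ((r / 2) ^ n); [exact Hp|].
  rewrite Rmult_assoc, Rinv_l, Rmult_1_r by lra.
  eapply Rle_trans; [exact HM|apply Rmax_l].
Qed.

Lemma CV_radius_recip d r : d O <> 0 -> 0 < r -> Rbar_le r (CV_radius d) ->
  exists rho, 0 < rho /\ Rbar_le rho (CV_radius (recip d)).
Proof.
  intros H0 Hr Hd. destruct (pseries_coef_geometric d r Hr Hd) as [K [c [HK [Hc Hdb]]]].
  set (B := c * (1 + K / Rabs (d O))).
  assert (Hs : 0 < Rabs (d O)) by (apply Rabs_pos_lt; exact H0).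
  assert (HB : 0 < B).
  { apply Rmult_lt_0_compat; [exact Hc|].
    assert (0 <= K / Rabs (d O)) by (apply Rdiv_le_0_compat; lra). lra. }
  exists (/ B). split; [apply Rinv_0_lt_compat; exact HB|].
  apply CV_radius_ge; [apply Rinv_0_lt_compat; exact HB|]. intros t Ht.
  apply CV_disk_correct.
  apply (@ex_series_le R_AbsRing R_CompleteNormedModule _
           (fun n => / Rabs (d O) * (B * Rabs t) ^ n)).
  - intro n. change (Rabs (Rabs (recip d n * t ^ n)) <= / Rabs (d O) * (B * Rabs t) ^ n).
    rewrite Rabs_Rabsolu, Rabs_mult, <- RPow_abs, Rpow_mult_distr.
    assert (0 <= Rabs t ^ n) by (apply pow_le, Rabs_pos).
    apply Rle_trans with (B ^ n / Rabs (d O) * Rabs t ^ n).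
    + apply Rmult_le_compat_r; [assumption|exact (recip_bound d K c H0 HK Hc Hdb n)].
    + right. unfold Rdiv. ring.
  - apply (ex_series_scal (V := R_NormedModule)), ex_series_geom.
    rewrite Rabs_pos_eq by (apply Rmult_le_pos; [lra|apply Rabs_pos]).
    apply Rmult_lt_reg_l with (/ B); [apply Rinv_0_lt_compat; exact HB|].
    rewrite <- Rmult_assoc, Rinv_l by lra. lra.
Qed.

Lemma ps_ball_inv G x0 r : ps_ball G x0 r -> G x0 <> 0 ->
  exists r', 0 < r' /\ r' <= r /\ ps_ball (fun x => / G x) x0 r' /\
    forall x, Rabs (x - x0) < r' -> G x <> 0.
Proof.
  intros HG H0. pose proof (ps_ball_pos _ _ _ HG) as Hr.
  destruct (ps_ball_center G x0 r HG) as [d [Hd [Hd0 HGd]]]. rewrite Hd0 in H0.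
  destruct (CV_radius_recip d r H0 Hr Hd) as [rho [Hrho Hrad]].
  set (r' := Rmin r rho).
  assert (Hr' : 0 < r') by (apply Rmin_pos; assumption).
  assert (Hprod : forall x, Rabs (x - x0) < r' -> G x * PSeries (recip d) (x - x0) = 1).
  { intros x Hx.
    assert (Hx1 : Rabs (x - x0) < r) by (eapply Rlt_le_trans; [exact Hx|apply Rmin_l]).
    assert (Hx2 : Rabs (x - x0) < rho) by (eapply Rlt_le_trans; [exact Hx|apply Rmin_r]).
    rewrite HGd, <- PSeries_mult by eauto using Rbar_lt_radius.
    rewrite (PSeries_ext _ ps_one) by (apply PS_mult_recip, H0). apply PSeries_ps_one. }
  exists r'. split; [exact Hr'|]. split; [apply Rmin_l|]. split.
  - split; [exact Hr'|]. exists (recip d). split.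
    + eapply Rbar_le_trans; [|exact Hrad]. apply Rmin_r.
    + intros x Hx. specialize (Hprod x Hx).
      assert (G x <> 0) by (intro h; rewrite h in Hprod; lra).
      apply Rmult_eq_reg_l with (G x); [|assumption]. rewrite Hprod. field. assumption.
  - intros x Hx h. specialize (Hprod x Hx). rewrite h in Hprod. lra.
Qed.

Lemma Can_ps_ball f : Can f -> forall x0, exists r, ps_ball f x0 r.
Proof.
  intros [H _] x0. destruct (H x0) as [r [Hr [a Ha]]]. exists r.
  split; [exact Hr|]. exists a. exact (ps_ball_Pser f x0 r a Hr Ha).
Qed.

Lemma Can_intro f : (forall x0, exists r, ps_ball f x0 r) ->
  (forall x, f (x + 2 * PI) = f x) -> Can f.
Proof.
  intros H Hper. split; [|exact Hper]. intro x0. destruct (H x0) as [r [Hr [d [Hd HF]]]].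
  exists r. split; [exact Hr|]. exists d. exact (Pser_ps_ball f x0 r d Hd HF).
Qed.

Lemma Can_plus f g : Can f -> Can g -> Can (fun x => f x + g x).
Proof.
  intros Hf Hg. apply Can_intro.
  - intro x0. destruct (Can_ps_ball f Hf x0) as [r1 H1]. destruct (Can_ps_ball g Hg x0) as [r2 H2].
    destruct (ps_ball_common f g x0 r1 r2 H1 H2) as [r [_ [_ [H1' H2']]]].
    exists r. apply ps_ball_plus; assumption.
  - intro x. rewrite (proj2 Hf), (proj2 Hg). reflexivity.
Qed.

Lemma Can_mult f g : Can f -> Can g -> Can (fun x => f x * g x).
Proof.
  intros Hf Hg. apply Can_intro.
  - intro x0. destruct (Can_ps_ball f Hf x0) as [r1 H1]. destruct (Can_ps_ball g Hg x0) as [r2 H2].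
    destruct (ps_ball_common f g x0 r1 r2 H1 H2) as [r [_ [_ [H1' H2']]]].
    exists r. apply ps_ball_mult; assumption.
  - intro x. rewrite (proj2 Hf), (proj2 Hg). reflexivity.
Qed.

Lemma Can_const c : Can (fun _ => c).
Proof. apply Can_intro; [|reflexivity]. intro x0. exists 1. apply ps_ball_const. lra. Qed.

Lemma Can_scal c f : Can f -> Can (fun x => c * f x).
Proof. intro Hf. exact (Can_mult _ _ (Can_const c) Hf). Qed.

Lemma Can_minus f g : Can f -> Can g -> Can (fun x => f x - g x).
Proof.
  intros Hf Hg. unfold Rminus.
  apply (Can_plus f (fun x => - g x) Hf).
  replace (fun x => - g x) with (fun x => -1 * g x)
    by (apply functional_extensionality; intro; ring).
  apply Can_scal, Hg.
Qed.

Lemma Can_pow f n : Can f -> Can (fun x => f x ^ n).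
Proof.
  intro Hf. induction n as [|n IH]; [exact (Can_const 1)|exact (Can_mult _ _ Hf IH)].
Qed.

Lemma periodic_IZR {A : Type} (f : R -> A) : (forall x, f (x + 2 * PI) = f x) ->
  forall (k : Z) x, f (x + 2 * PI * IZR k) = f x.
Proof.
  intros H.
  assert (Hnat : forall n x, f (x + 2 * PI * INR n) = f x).
  { induction n as [|n IH]; intro x.
    - simpl. rewrite Rmult_0_r, Rplus_0_r. reflexivity.
    - rewrite S_INR.
      replace (x + 2 * PI * (INR n + 1)) with (x + 2 * PI * INR n + 2 * PI) by ring.
      rewrite H. apply IH. }
  intros [|p|p] x.
  - simpl. rewrite Rmult_0_r, Rplus_0_r. reflexivity.
  - rewrite <- (positive_nat_Z p), <- INR_IZR_INZ. apply Hnat.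
  - rewrite <- Pos2Z.opp_pos, opp_IZR, <- (positive_nat_Z p), <- INR_IZR_INZ.
    rewrite <- (Hnat (Pos.to_nat p) (x + 2 * PI * - INR (Pos.to_nat p))). f_equal. ring.
Qed.

Lemma periodic_IZR_sub {A : Type} (f : R -> A) : (forall x, f (x + 2 * PI) = f x) ->
  forall (k : Z) x, f (x - 2 * PI * IZR k) = f x.
Proof.
  intros H k x. rewrite <- (periodic_IZR f H k (x - 2 * PI * IZR k)). f_equal. ring.
Qed.

Lemma S1_representative x : exists (k : Z) y, S1pt y /\ x = y + 2 * PI * IZR k.
Proof.
  assert (HP := PI_RGT_0). set (k := Zfloor (x / (2 * PI))).
  exists k, (x - 2 * PI * IZR k). split; [|ring].
  destruct (Zfloor_bound (x / (2 * PI))) as [H1 H2]. fold k in H1, H2.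
  apply Rmult_le_compat_r with (r := 2 * PI) in H1; [|lra].
  apply Rmult_lt_compat_r with (r := 2 * PI) in H2; [|lra].
  unfold Rdiv in H1, H2. rewrite Rmult_assoc, Rinv_l, Rmult_1_r in H1, H2 by lra.
  unfold S1pt. lra.
Qed.

Lemma S1pt_eq_mod p q k : S1pt p -> S1pt q -> p - q = 2 * PI * IZR k -> p = q.
Proof.
  intros Hp Hq H. unfold S1pt in *. assert (HP := PI_RGT_0).
  assert (Hk1 : -1 < IZR k) by (apply Rmult_lt_reg_l with (2 * PI); lra).
  assert (Hk2 : IZR k < 1) by (apply Rmult_lt_reg_l with (2 * PI); lra).
  apply lt_IZR in Hk1. apply lt_IZR in Hk2. replace k with 0%Z in H by lia. simpl in H. lra.
Qed.

Lemma cos_eq_1_int y : cos y = 1 -> exists k, y = 2 * PI * IZR k.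
Proof.
  intro H. assert (HP := PI_RGT_0).
  destruct (S1_representative y) as [k [y' [Hy' Hyy]]]. exists k.
  assert (Hc : cos y' = 1).
  { rewrite <- H, Hyy. symmetry. apply (periodic_IZR cos). intro x.
    rewrite cos_plus, cos_2PI, sin_2PI. ring. }
  unfold S1pt in Hy'.
  destruct (Req_dec y' 0) as [->|hne]; [lra|exfalso].
  destruct (Rle_dec y' PI) as [h|h].
  - assert (cos y' < cos 0) by (apply cos_decreasing_1; lra). rewrite cos_0 in *. lra.
  - assert (cos y' < cos (2 * PI)) by (apply cos_increasing_1; lra). rewrite cos_2PI in *. lra.
Qed.

Lemma cos_eq_1_sin y : cos y = 1 -> sin y = 0.
Proof.
  intro H. assert (Hs := sin2_cos2 y). rewrite H in Hs. unfold Rsqr in Hs.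
  assert (sin y * sin y = 0) by lra. apply Rmult_integral in H0. tauto.
Qed.

Definition even_part (a : nat -> R) (n : nat) : R := if Nat.even n then a (Nat.div2 n) else 0.
Definition odd_part (a : nat -> R) (n : nat) : R := if Nat.even n then 0 else a (Nat.div2 n).

Lemma even_double_succ n : Nat.even (2 * n + 1) = false.
Proof. rewrite Nat.add_1_r, Nat.even_succ, Nat.odd_mul. reflexivity. Qed.

Lemma is_pseries_0 x : is_pseries (fun _ : nat => 0) x 0.
Proof.
  pose proof (PSeries_correct (fun _ : nat => 0) x) as H.
  rewrite PSeries_const_0 in H. apply H, CV_radius_inside. rewrite CV_radius_const_0. exact I.
Qed.

Lemma is_pseries_cos t : is_pseries (even_part cos_n) t (cos t).
Proof.
  replace (cos t) with (cos t + t * 0) by ring. apply is_pseries_odd_even.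
  - eapply is_pseries_ext.
    { intro n. unfold even_part. rewrite Nat.even_mul, Nat.div2_double. reflexivity. }
    apply is_pseries_Reals. unfold cos. destruct (exist_cos (Rsqr t)) as [a Ha].
    replace (t ^ 2) with (Rsqr t) by (unfold Rsqr; ring). exact Ha.
  - eapply is_pseries_ext; [intro n; unfold even_part; rewrite even_double_succ; reflexivity|].
    apply is_pseries_0.
Qed.

Lemma is_pseries_sin t : is_pseries (odd_part sin_n) t (sin t).
Proof.
  unfold sin. destruct (exist_sin (Rsqr t)) as [a Ha].
  replace (t * a) with (0 + t * a) by ring. apply is_pseries_odd_even.
  - eapply is_pseries_ext; [intro n; unfold odd_part; rewrite Nat.even_mul; reflexivity|].
    apply is_pseries_0.
  - eapply is_pseries_ext.
    { intro n. unfold odd_part. rewrite even_double_succ, Nat.add_1_r, Nat.div2_succ_double.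
      reflexivity. }
    apply is_pseries_Reals. replace (t ^ 2) with (Rsqr t) by (unfold Rsqr; ring). exact Ha.
Qed.

Lemma ps_ball_entire a F x0 r : 0 < r -> (forall t, is_pseries a t (F t)) ->
  ps_ball (fun x => F (x - x0)) x0 r.
Proof.
  intros Hr H. split; [exact Hr|]. exists a. split.
  - apply CV_radius_ge; [exact Hr|]. intros t _. exists (F t). apply H.
  - intros x _. symmetry. apply is_pseries_unique, H.
Qed.

Lemma Can_cos p : Can (fun x => cos (x - p)).
Proof.
  apply Can_intro.
  - intro x0. exists 1. eapply ps_ball_ext.
    + apply ps_ball_plus; apply ps_ball_mult.
      * exact (ps_ball_entire _ cos x0 1 Rlt_0_1 is_pseries_cos).
      * exact (ps_ball_const (cos (x0 - p)) x0 1 Rlt_0_1).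
      * exact (ps_ball_entire _ sin x0 1 Rlt_0_1 is_pseries_sin).
      * exact (ps_ball_const (- sin (x0 - p)) x0 1 Rlt_0_1).
    + intros x _. simpl. replace (x - p) with ((x - x0) + (x0 - p)) by ring.
      rewrite cos_plus. ring.
  - intro x. replace (x + 2 * PI - p) with ((x - p) + 2 * PI) by ring.
    rewrite cos_plus, cos_2PI, sin_2PI. ring.
Qed.

Lemma Can_sin p : Can (fun x => sin (x - p)).
Proof.
  apply Can_intro.
  - intro x0. exists 1. eapply ps_ball_ext.
    + apply ps_ball_plus; apply ps_ball_mult.
      * exact (ps_ball_entire _ sin x0 1 Rlt_0_1 is_pseries_sin).
      * exact (ps_ball_const (cos (x0 - p)) x0 1 Rlt_0_1).
      * exact (ps_ball_entire _ cos x0 1 Rlt_0_1 is_pseries_cos).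
      * exact (ps_ball_const (sin (x0 - p)) x0 1 Rlt_0_1).
    + intros x _. simpl. replace (x - p) with ((x - x0) + (x0 - p)) by ring.
      rewrite sin_plus. ring.
  - intro x. replace (x + 2 * PI - p) with ((x - p) + 2 * PI) by ring.
    rewrite sin_plus, cos_2PI, sin_2PI. ring.
Qed.

Lemma Can_zero_near_left f s e : Can f -> 0 < e -> (forall z, s - e < z < s -> f z = 0) ->
  exists r, 0 < r /\ forall x, Rabs (x - s) < r -> f x = 0.
Proof.
  intros Hf He Hz. destruct (Can_ps_ball f Hf s) as [r Hr].
  destruct (ps_ball_dichotomy f s r Hr) as [Hall|[m [G [HG [HG0 HfG]]]]].
  - exists r. split; [exact (ps_ball_pos _ _ _ Hr)|exact Hall].
  - exfalso. pose proof (ps_ball_pos _ _ _ Hr).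
    destruct (ps_ball_nonzero_near G s r HG HG0) as [d [Hd HGn]].
    set (t := Rmin d (Rmin r e)).
    assert (Ht : 0 < t) by (apply Rmin_pos; [|apply Rmin_pos]; assumption).
    assert (Ht1 := Rmin_l d (Rmin r e)). assert (Ht2 := Rmin_r d (Rmin r e)).
    assert (Ht3 := Rmin_l r e). assert (Ht4 := Rmin_r r e). fold t in Ht1, Ht2.
    assert (Hdist : Rabs (s - t / 2 - s) = t / 2)
      by (replace (s - t / 2 - s) with (- (t / 2)) by ring; rewrite Rabs_Ropp, Rabs_pos_eq; lra).
    assert (Hfz : f (s - t / 2) = 0) by (apply Hz; lra).
    rewrite HfG in Hfz by lra. apply Rmult_integral in Hfz. destruct Hfz as [h|h].
    + apply (pow_nonzero (s - t / 2 - s) m); [lra|exact h].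
    + exact (HGn (s - t / 2) ltac:(lra) h).
Qed.

Lemma Can_zero_forward f x0 delta : Can f -> 0 < delta ->
  (forall x, Rabs (x - x0) < delta -> f x = 0) -> forall y, x0 <= y -> f y = 0.
Proof.
  intros Hf Hd Hz y Hy. apply NNPP. intro Hfy.
  set (A := fun t => x0 <= t /\ forall z, x0 <= z <= t -> f z = 0).
  assert (HbA : forall t, A t -> t < y).
  { intros t [Ht1 Ht2]. destruct (Rlt_le_dec t y) as [h|h]; [exact h|].
    exfalso. apply Hfy, Ht2. lra. }
  assert (Hx0 : A (x0 + delta / 2)).
  { split; [lra|]. intros z Hz'. apply Hz. rewrite Rabs_pos_eq; lra. }
  destruct (completeness A) as [s [Hub Hlub]].
  { exists y. intros t Ht. left. apply HbA, Ht. }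
  { exists (x0 + delta / 2). exact Hx0. }
  assert (Hs1 : x0 + delta / 2 <= s) by (apply Hub, Hx0).
  assert (Hleft : forall z, x0 <= z < s -> f z = 0).
  { intros z Hz'. apply NNPP. intro hf.
    assert (Hzub : is_upper_bound A z).
    { intros t [Ht1 Ht2]. destruct (Rle_dec t z) as [h|h]; [exact h|].
      exfalso. apply hf, Ht2. lra. }
    specialize (Hlub z Hzub). lra. }
  destruct (Can_zero_near_left f s (s - x0) Hf ltac:(lra)) as [r [Hr Hnear]].
  { intros z Hz'. apply Hleft. lra. }
  assert (HA : A (s + r / 2)).
  { split; [lra|]. intros z Hz'. destruct (Rlt_le_dec z s) as [h|h].
    - apply Hleft. lra.
    - apply Hnear. rewrite Rabs_pos_eq; lra. }
  specialize (Hub _ HA). lra.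
Qed.

Lemma Can_zero_near f x0 delta : Can f -> 0 < delta ->
  (forall x, Rabs (x - x0) < delta -> f x = 0) -> forall x, f x = 0.
Proof.
  intros Hf Hd Hz x. destruct (S1_representative (x - x0)) as [k [y [Hy Hxy]]].
  replace x with ((x0 + y) + 2 * PI * IZR k) by lra.
  rewrite (periodic_IZR f (proj2 Hf)). apply (Can_zero_forward f x0 delta Hf Hd Hz).
  unfold S1pt in Hy. lra.
Qed.

Lemma Can_factor_order f p : Can f -> nonzero_fun f ->
  exists r m G, ps_ball G p r /\ G p <> 0 /\
    forall x, Rabs (x - p) < r -> f x = (x - p) ^ m * G x.
Proof.
  intros Hf [x1 Hx1]. destruct (Can_ps_ball f Hf p) as [r Hr].
  destruct (ps_ball_dichotomy f p r Hr) as [Hall|[m [G H]]].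
  - exfalso. exact (Hx1 (Can_zero_near f p r Hf (ps_ball_pos _ _ _ Hr) Hall x1)).
  - exists r, m, G. exact H.
Qed.

Lemma Can_isolated_zeros f y : Can f -> nonzero_fun f ->
  exists delta, 0 < delta /\ forall z, 0 < Rabs (z - y) < delta -> f z <> 0.
Proof.
  intros Hf Hn. destruct (Can_factor_order f y Hf Hn) as [r [m [G [HG [HG0 HfG]]]]].
  destruct (ps_ball_nonzero_near G y r HG HG0) as [d [Hd Hn']].
  pose proof (ps_ball_pos _ _ _ HG).
  exists (Rmin r d). split; [apply Rmin_pos; assumption|].
  intros z [Hz1 Hz2]. assert (E1 := Rmin_l r d). assert (E2 := Rmin_r r d).
  rewrite HfG by lra. apply Rmult_integral_contrapositive_currified.
  - apply pow_nonzero. intro e. rewrite e, Rabs_R0 in Hz1. lra.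
  - apply Hn'. lra.
Qed.

Lemma Can_mult_eq0 f q : Can f -> Can q -> nonzero_fun q ->
  (forall x, f x * q x = 0) -> forall x, f x = 0.
Proof.
  intros Hf Hq Hqn H x. apply NNPP. intro hx.
  destruct (Can_isolated_zeros f 0 Hf (ex_intro _ x hx)) as [d1 [Hd1 H1]].
  destruct (Can_isolated_zeros q 0 Hq Hqn) as [d2 [Hd2 H2]].
  set (z := Rmin d1 d2 / 2).
  assert (Hz : 0 < Rabs (z - 0) < Rmin d1 d2).
  { assert (0 < Rmin d1 d2) by (apply Rmin_pos; assumption).
    unfold z. rewrite Rminus_0_r, Rabs_pos_eq; lra. }
  assert (E1 := Rmin_l d1 d2). assert (E2 := Rmin_r d1 d2).
  apply (Rmult_integral_contrapositive_currified (f z) (q z)); [apply H1|apply H2|apply H]; lra.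
Qed.

Definition ord_ge (f : R -> R) (p : R) (a : nat) : Prop :=
  exists r G, ps_ball G p r /\ forall x, Rabs (x - p) < r -> f x = (x - p) ^ a * G x.

Definition ord_eq (f : R -> R) (p : R) (a : nat) : Prop :=
  exists r G, ps_ball G p r /\ G p <> 0 /\
    forall x, Rabs (x - p) < r -> f x = (x - p) ^ a * G x.

Lemma ord_eq_ge f p a : ord_eq f p a -> ord_ge f p a.
Proof. intros [r [G [HG [_ Hf]]]]. exists r, G. split; assumption. Qed.

Lemma ord_ge_0 f p : Can f -> ord_ge f p 0.
Proof.
  intro Hf. destruct (Can_ps_ball f Hf p) as [r Hr]. exists r, f. split; [exact Hr|].
  intros. simpl. ring.
Qed.

Lemma ord_eq_0 f p : Can f -> f p <> 0 -> ord_eq f p 0.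
Proof.
  intros Hf H. destruct (Can_ps_ball f Hf p) as [r Hr]. exists r, f.
  split; [exact Hr|]. split; [exact H|]. intros. simpl. ring.
Qed.

Lemma ord_eq_0_nonzero f p : ord_eq f p 0 -> f p <> 0.
Proof.
  intros [r [G [HG [HG0 Hf]]]].
  rewrite Hf by exact (Rabs_center_lt p r (ps_ball_pos _ _ _ HG)). simpl. rewrite Rmult_1_l.
  exact HG0.
Qed.

Lemma ord_ge_fun0 p a : ord_ge (fun _ => 0) p a.
Proof. exists 1, (fun _ => 0). split; [apply ps_ball_const; lra|]. intros. ring. Qed.

Lemma Can_ord_eq f p : Can f -> nonzero_fun f -> exists m, ord_eq f p m.
Proof.
  intros Hf Hn. destruct (Can_factor_order f p Hf Hn) as [r [m [G HG]]].
  exists m, r, G. exact HG.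
Qed.

Lemma ord_ge_common f g p a b : ord_ge f p a -> ord_ge g p b -> exists r F G,
  ps_ball F p r /\ ps_ball G p r /\
  (forall x, Rabs (x - p) < r -> f x = (x - p) ^ a * F x) /\
  (forall x, Rabs (x - p) < r -> g x = (x - p) ^ b * G x).
Proof.
  intros [r1 [F [HF Hf]]] [r2 [G [HG Hg]]].
  destruct (ps_ball_common F G p r1 r2 HF HG) as [r [H1 [H2 [HF' HG']]]].
  exists r, F, G. split; [exact HF'|]. split; [exact HG'|].
  split; intros x Hx; [apply Hf|apply Hg]; lra.
Qed.

Lemma ord_ge_plus f g p a : ord_ge f p a -> ord_ge g p a -> ord_ge (fun x => f x + g x) p a.
Proof.
  intros H1 H2. destruct (ord_ge_common f g p a a H1 H2) as [r [F [G [HF [HG [Hf Hg]]]]]].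
  exists r, (fun x => F x + G x). split; [apply ps_ball_plus; assumption|].
  intros x Hx. rewrite Hf, Hg by exact Hx. ring.
Qed.

Lemma ord_ge_mult f g p a b : ord_ge f p a -> ord_ge g p b ->
  ord_ge (fun x => f x * g x) p (a + b).
Proof.
  intros H1 H2. destruct (ord_ge_common f g p a b H1 H2) as [r [F [G [HF [HG [Hf Hg]]]]]].
  exists r, (fun x => F x * G x). split; [apply ps_ball_mult; assumption|].
  intros x Hx. rewrite Hf, Hg, pow_add by exact Hx. ring.
Qed.

Lemma ord_ge_Can_mult h f p a : Can h -> ord_ge f p a -> ord_ge (fun x => h x * f x) p a.
Proof. intros Hh Hf. exact (ord_ge_mult h f p 0 a (ord_ge_0 h p Hh) Hf). Qed.

Lemma ord_ge_mult_Can f h p a : Can h -> ord_ge f p a -> ord_ge (fun x => f x * h x) p a.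
Proof.
  intros Hh Hf. rewrite <- (Nat.add_0_r a). exact (ord_ge_mult f h p a 0 Hf (ord_ge_0 h p Hh)).
Qed.

Lemma ord_ge_le f p a b : ord_ge f p a -> (b <= a)%nat -> ord_ge f p b.
Proof.
  intros [r [G [HG Hf]]] Hba. exists r, (fun x => (x - p) ^ (a - b) * G x). split.
  - apply ps_ball_mult; [apply ps_ball_pow, ps_ball_id, (ps_ball_pos _ _ _ HG)|exact HG].
  - intros x Hx. rewrite Hf, <- Rmult_assoc, <- pow_add by exact Hx.
    replace (b + (a - b))%nat with a by lia. reflexivity.
Qed.

Lemma ord_ge_1_iff f p : Can f -> ord_ge f p 1 <-> f p = 0.
Proof.
  intro Hf. split.
  - intros [r [G [HG Hfe]]].
    rewrite Hfe, Rminus_diag by (apply Rabs_center_lt, (ps_ball_pos _ _ _ HG)). ring.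
  - intro H0. destruct (Can_ps_ball f Hf p) as [r Hr].
    destruct (ps_ball_center f p r Hr) as [d [Hd [Hd0 HF]]].
    destruct (ps_ball_factor f p r d 1 (ps_ball_pos _ _ _ Hr) Hd HF) as [G [HG [_ HfG]]].
    { intros k Hk. replace k with O by lia. rewrite <- Hd0. exact H0. }
    exists r, G. split; assumption.
Qed.

Lemma ord_ge_pow f p n : ord_ge f p 1 -> ord_ge (fun x => f x ^ n) p n.
Proof.
  intro H. induction n as [|n IH].
  - exists 1, (fun _ => 1). split; [apply ps_ball_const; lra|]. intros. simpl. ring.
  - exact (ord_ge_mult f (fun x => f x ^ n) p 1 n H IH).
Qed.

Lemma ord_eq_scal c f p m : c <> 0 -> ord_eq f p m -> ord_eq (fun x => c * f x) p m.
Proof.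
  intros hc [r [G [HG [HG0 Hf]]]]. exists r, (fun x => c * G x). split; [|split].
  - apply ps_ball_mult; [apply ps_ball_const, (ps_ball_pos _ _ _ HG)|exact HG].
  - apply Rmult_integral_contrapositive_currified; assumption.
  - intros x Hx. rewrite Hf by exact Hx. ring.
Qed.

Lemma ord_eq_shift f p a k : (forall x, f (x + 2 * PI) = f x) ->
  ord_eq f p a -> ord_eq f (p + 2 * PI * IZR k) a.
Proof.
  intros Hper [r [G [HG [HG0 Hf]]]]. exists r, (fun x => G (x - 2 * PI * IZR k)).
  split; [apply ps_ball_shift, HG|]. split.
  - replace (p + 2 * PI * IZR k - 2 * PI * IZR k) with p by ring. exact HG0.
  - intros x Hx. rewrite <- (periodic_IZR_sub f Hper k x), Hf.
    + replace (x - (p + 2 * PI * IZR k)) with (x - 2 * PI * IZR k - p) by ring. reflexivity.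
    + replace (x - 2 * PI * IZR k - p) with (x - (p + 2 * PI * IZR k)) by ring. exact Hx.
Qed.

Lemma ord_ge_shift f p a k : (forall x, f (x + 2 * PI) = f x) ->
  ord_ge f p a -> ord_ge f (p + 2 * PI * IZR k) a.
Proof.
  intros Hper [r [G [HG Hf]]]. exists r, (fun x => G (x - 2 * PI * IZR k)).
  split; [apply ps_ball_shift, HG|].
  intros x Hx. rewrite <- (periodic_IZR_sub f Hper k x), Hf.
  - replace (x - (p + 2 * PI * IZR k)) with (x - 2 * PI * IZR k - p) by ring. reflexivity.
  - replace (x - 2 * PI * IZR k - p) with (x - (p + 2 * PI * IZR k)) by ring. exact Hx.
Qed.

Lemma vanish_order_ord_eq f p n : vanish_order f p n <-> ord_eq f p n.
Proof.
  split.
  - intros [r [Hr [a [Ha [Hz Hn]]]]].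
    destruct (ps_ball_Pser f p r a Hr Ha) as [Hd HF].
    destruct (ps_ball_factor f p r a n Hr Hd HF Hz) as [G [HG [HG0 HfG]]].
    exists r, G. rewrite HG0. auto.
  - intros [r [G [HG [HG0 Hf]]]]. pose proof (ps_ball_pos _ _ _ HG) as Hr.
    destruct (ps_ball_center G p r HG) as [d [Hd [Hd0 HGd]]].
    exists r. split; [exact Hr|]. exists (PS_incr_n d n). split; [|split].
    + intros x Hx. rewrite Hf, HGd, <- PSeries_incr_n by exact Hx.
      apply is_pseries_Reals, PSeries_correct, ex_pseries_incr_n.
      exact (ps_ball_inside _ _ _ _ Hx Hd).
    + intros k Hk. rewrite PS_incr_n_simplify.
      destruct (Compare_dec.le_lt_dec n k); [lia|reflexivity].
    + rewrite PS_incr_n_simplify. destruct (Compare_dec.le_lt_dec n n); [|lia].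
      rewrite Nat.sub_diag, <- Hd0. exact HG0.
Qed.

(* [y] is the value at [x] of an analytic continuation of [u / q] across [x]. *)
Definition quot_germ (u q : R -> R) (x y : R) : Prop :=
  exists r W, ps_ball W x r /\ W x = y /\
    forall z, 0 < Rabs (z - x) < r -> q z <> 0 /\ W z = u z / q z.

Definition Can_div (u q : R -> R) (x : R) : R :=
  if Req_EM_T (q x) 0 then epsilon (inhabits 0) (quot_germ u q x) else u x / q x.

Definition zeros_matched (u q : R -> R) : Prop :=
  forall p, q p = 0 -> exists m, ord_eq q p m /\ ord_ge u p m.

Lemma quot_ps_ball u q p m a : ord_eq q p m -> ord_ge u p (m + a) ->
  exists r W, ps_ball W p r /\
    forall x, 0 < Rabs (x - p) < r -> q x <> 0 /\ u x / q x = (x - p) ^ a * W x.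
Proof.
  intros [r1 [Q [HQ [HQ0 Hq]]]] [r2 [U [HU Hu]]].
  destruct (ps_ball_inv Q p r1 HQ HQ0) as [r3 [Hr3 [Hr31 [HiQ HQn]]]].
  destruct (ps_ball_common U (fun x => / Q x) p r2 r3 HU HiQ) as [r [Hr2 [Hr3' [HU' HiQ']]]].
  exists r, (fun x => U x * / Q x). split; [apply ps_ball_mult; assumption|].
  intros x [Hx1 Hx2].
  assert (Hp : (x - p) ^ m <> 0) by (apply pow_nonzero; intro e; rewrite e, Rabs_R0 in Hx1; lra).
  assert (HQx : Q x <> 0) by (apply HQn; lra).
  rewrite Hq, Hu, pow_add by lra. split.
  - apply Rmult_integral_contrapositive_currified; assumption.
  - field. split; assumption.
Qed.

Lemma quot_germ_exists u q p m : ord_eq q p m -> ord_ge u p m -> exists y, quot_germ u q p y.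
Proof.
  intros Hq Hu. rewrite <- (Nat.add_0_r m) in Hu.
  destruct (quot_ps_ball u q p m 0 Hq Hu) as [r [W [HW HWe]]].
  exists (W p), r, W. split; [exact HW|]. split; [reflexivity|].
  intros z Hz. destruct (HWe z Hz) as [Hqz E]. split; [exact Hqz|]. rewrite E. simpl. ring.
Qed.

Lemma quot_germ_periodic u q x : (forall z, u (z + 2 * PI) = u z) ->
  (forall z, q (z + 2 * PI) = q z) -> quot_germ u q (x + 2 * PI) = quot_germ u q x.
Proof.
  intros Hu Hq.
  assert (Hsh : forall x c, (forall z, u (z + c) = u z) -> (forall z, q (z + c) = q z) ->
            forall y, quot_germ u q (x + c) y -> quot_germ u q x y).
  { clear x Hu Hq. intros x c Hu Hq y [r [W [HW [HWx HWz]]]].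
    exists r, (fun z => W (z - - c)). split; [|split].
    - pose proof (ps_ball_shift W (x + c) r (- c) HW) as H.
      replace (x + c + - c) with x in H by ring. exact H.
    - rewrite <- HWx. f_equal. ring.
    - intros z Hz. replace (z - - c) with (z + c) by ring. rewrite <- Hu, <- Hq.
      apply HWz. replace (z + c - (x + c)) with (z - x) by ring. exact Hz. }
  assert (Hu' : forall z, u (z + - (2 * PI)) = u z)
    by (intro z; rewrite <- (Hu (z + - (2 * PI))); f_equal; ring).
  assert (Hq' : forall z, q (z + - (2 * PI)) = q z)
    by (intro z; rewrite <- (Hq (z + - (2 * PI))); f_equal; ring).
  apply functional_extensionality. intro y. apply propositional_extensionality. split.
  - apply Hsh; assumption.
  - intro H. apply (Hsh _ (- (2 * PI)) Hu' Hq').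
    replace (x + 2 * PI + - (2 * PI)) with x by ring. exact H.
Qed.

Lemma Can_div_near_zero u q x0 : zeros_matched u q -> q x0 = 0 ->
  exists r, ps_ball (Can_div u q) x0 r.
Proof.
  intros Hz h0. destruct (Hz x0 h0) as [m [Hm1 Hm2]].
  pose proof (epsilon_spec (inhabits 0) (quot_germ u q x0) (quot_germ_exists u q x0 m Hm1 Hm2))
    as [r [W [HW [HWx HWz]]]].
  exists r. apply (ps_ball_ext W); [exact HW|]. intros z Hz'. unfold Can_div.
  destruct (Req_dec z x0) as [->|hne].
  - destruct (Req_EM_T (q x0) 0); [exact HWx|contradiction].
  - destruct (HWz z) as [A B]; [split; [apply Rabs_pos_lt; lra|exact Hz']|].
    destruct (Req_EM_T (q z) 0); [contradiction|exact B].
Qed.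

Lemma Can_div_near_nonzero u q x0 : Can u -> Can q -> q x0 <> 0 ->
  exists r, ps_ball (Can_div u q) x0 r.
Proof.
  intros Hu Hq h0. destruct (Can_ps_ball q Hq x0) as [r1 Hr1].
  destruct (ps_ball_inv q x0 r1 Hr1 h0) as [r3 [Hr3 [_ [HiQ HQn]]]].
  destruct (Can_ps_ball u Hu x0) as [r2 Hr2].
  destruct (ps_ball_common u (fun x => / q x) x0 r2 r3 Hr2 HiQ) as [r [_ [Hr [H1 H2]]]].
  exists r. apply (ps_ball_ext (fun x => u x * / q x)); [apply ps_ball_mult; assumption|].
  intros z Hz'. unfold Can_div. destruct (Req_EM_T (q z) 0) as [e|_]; [|reflexivity].
  exfalso. apply (HQn z); [lra|exact e].
Qed.

Lemma Can_divides u q : Can u -> Can q -> zeros_matched u q ->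
  exists w, Can w /\ forall x, u x = w x * q x.
Proof.
  intros Hu Hq Hz. exists (Can_div u q). split.
  - apply Can_intro.
    + intro x0. destruct (Req_EM_T (q x0) 0) as [h0|h0].
      * exact (Can_div_near_zero u q x0 Hz h0).
      * exact (Can_div_near_nonzero u q x0 Hu Hq h0).
    + intro x. unfold Can_div. rewrite (proj2 Hq), (proj2 Hu), quot_germ_periodic
        by (apply Hu || apply Hq). reflexivity.
  - intro x. unfold Can_div. destruct (Req_EM_T (q x) 0) as [h|h]; [|field; exact h].
    destruct (Hz x h) as [[|m] [Hm1 Hm2]]; rewrite h, Rmult_0_r.
    + exfalso. exact (ord_eq_0_nonzero q x Hm1 h).
    + apply (ord_ge_1_iff u x Hu). apply (ord_ge_le u x (S m)); [exact Hm2|lia].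
Qed.


Lemma ord_ge_quot c u q p m a : Can c -> (forall x, u x = c x * q x) ->
  ord_eq q p m -> ord_ge u p (m + a) -> ord_ge c p a.
Proof.
  intros Hc Hcu Hq Hu. destruct (quot_ps_ball u q p m a Hq Hu) as [r [W [HW HWe]]].
  pose proof (ps_ball_pos _ _ _ HW) as Hr.
  assert (Hpunct : forall x, 0 < Rabs (x - p) < r -> c x = (x - p) ^ a * W x).
  { intros x Hx. destruct (HWe x Hx) as [Hqx E]. rewrite <- E, Hcu. field. exact Hqx. }
  exists r, W. split; [exact HW|].
  intros x Hx. destruct (Req_dec x p) as [->|hne].
  - destruct (Can_ps_ball c Hc p) as [r4 Hr4].
    apply (ps_ball_punctured_eq c (fun x => (x - p) ^ a * W x) p r4 r Hr4).
    + apply ps_ball_mult; [apply ps_ball_pow, ps_ball_id; exact Hr|exact HW].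
    + exists r. split; [exact Hr|exact Hpunct].
  - apply Hpunct. split; [apply Rabs_pos_lt; lra|exact Hx].
Qed.

Definition versine (p x : R) : R := 1 - cos (x - p).

Lemma Can_versine p : Can (versine p).
Proof. exact (Can_minus _ _ (Can_const 1) (Can_cos p)). Qed.

Lemma versine_nonzero p : nonzero_fun (versine p).
Proof.
  exists (p + PI). unfold versine. replace (p + PI - p) with PI by ring. rewrite cos_PI. lra.
Qed.

Lemma versine_ord_ge_1 p : ord_ge (versine p) p 1.
Proof.
  apply (ord_ge_1_iff _ _ (Can_versine p)). unfold versine. rewrite Rminus_diag, cos_0. ring.
Qed.

Lemma versine_ord_eq z p : cos (z - p) = 1 -> ord_eq (versine p) z 2.
Proof.
  intro H. set (d := PS_minus ps_one (even_part cos_n)).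
  assert (Hser : forall t, is_pseries d t (1 - cos t)).
  { intro t. assert (H1 : is_pseries ps_one t 1).
    { rewrite <- (PSeries_ps_one t). apply PSeries_correct, CV_radius_inside.
      rewrite CV_radius_ps_one. exact I. }
    exact (is_pseries_minus _ _ t 1 (cos t) H1 (is_pseries_cos t)). }
  assert (Hd : Rbar_le 1 (CV_radius d)).
  { apply CV_radius_ge; [lra|]. intros t _. exists (1 - cos t). apply Hser. }
  assert (HF : forall x, Rabs (x - z) < 1 -> versine p x = PSeries d (x - z)).
  { intros x _. rewrite (is_pseries_unique _ _ _ (Hser (x - z))).
    unfold versine. replace (x - p) with ((x - z) + (z - p)) by ring.
    rewrite cos_plus, H, (cos_eq_1_sin _ H). ring. }
  destruct (ps_ball_factor (versine p) z 1 d 2 ltac:(lra) Hd HF) as [G [HG [HG0 HfG]]].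
  { intros [|[|k]] Hk; [| |lia]; unfold d, PS_minus, PS_plus, PS_opp, even_part, cos_n;
      simpl; unfold plus, opp; simpl; field. }
  exists 1, G. split; [exact HG|]. split; [|exact HfG].
  rewrite HG0. unfold d, PS_minus, PS_plus, PS_opp, even_part, cos_n. simpl.
  unfold plus, opp. simpl. lra.
Qed.

Definition ord_ideal (L : list (R * nat)) (g : R -> R) : Prop :=
  Can g /\ forall pa, In pa L -> ord_ge g (fst pa) (snd pa).

Lemma ord_ideal_fun0 L : ord_ideal L (fun _ => 0).
Proof. split; [apply Can_const|]. intros. apply ord_ge_fun0. Qed.

Lemma ord_ideal_plus L f g : ord_ideal L f -> ord_ideal L g -> ord_ideal L (fun x => f x + g x).
Proof.
  intros [Hf1 Hf2] [Hg1 Hg2]. split; [apply Can_plus; assumption|].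
  intros pa Hpa. apply ord_ge_plus; auto.
Qed.

Lemma ord_ideal_single p a f : ord_ideal ((p, a) :: nil) f <-> Can f /\ ord_ge f p a.
Proof.
  split.
  - intros [Hf H]. split; [exact Hf|]. exact (H (p, a) (or_introl eq_refl)).
  - intros [Hf H]. split; [exact Hf|]. intros pa [<-|[]]. exact H.
Qed.

Lemma idmul_mono (X X' Y Y' : (R -> R) -> Prop) h :
  (forall f, X f -> X' f) -> (forall g, Y g -> Y' g) -> idmul X Y h -> idmul X' Y' h.
Proof.
  intros HX HY H. induction H; [apply idmul0|apply idmul_add; auto].
Qed.

Lemma idmul_ind_closed (X Y Z : (R -> R) -> Prop) h :
  (forall f g, X f -> Y g -> Z (fun x => f x * g x)) -> Z (fun _ => 0) ->
  (forall f g, Z f -> Z g -> Z (fun x => f x + g x)) -> idmul X Y h -> Z h.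
Proof.
  intros Hm H0 Hp H. induction H; [exact H0|]. apply (Hp (fun x => f x * g x) h); auto.
Qed.

Lemma idmul_two (X Y : (R -> R) -> Prop) f1 g1 f2 g2 h :
  X f1 -> Y g1 -> X f2 -> Y g2 -> (forall x, h x = f1 x * g1 x + f2 x * g2 x) -> idmul X Y h.
Proof.
  intros H1 H2 H3 H4 E.
  replace h with (fun x => f1 x * g1 x + (f2 x * g2 x + 0))
    by (apply functional_extensionality; intro x; rewrite E; ring).
  apply (idmul_add X Y f1 g1 _ H1 H2), (idmul_add X Y f2 g2 _ H3 H4), idmul0.
Qed.

(* Uses [sin^2 = versine * (2 - versine)]: multiplying by [2 versine] turns the claimed
   identity into [g * sin^2 + versine^2 * g = 2 versine * g]. *)
Lemma ord_ge_S_decompose g p a : Can g -> ord_ge g p (S a) ->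
  exists c, Can c /\ ord_ge c p a /\
    forall x, g x = sin (x - p) * c x + versine p x * (/ 2 * g x).
Proof.
  intros HgC Hgv.
  set (u := fun x => g x * sin (x - p)). set (q := fun x => 2 * versine p x).
  assert (Hu : Can u) by exact (Can_mult _ _ HgC (Can_sin p)).
  assert (Hq : Can q) by exact (Can_scal 2 _ (Can_versine p)).
  assert (Hgp : g p = 0) by (apply (ord_ge_1_iff g p HgC), (ord_ge_le g p (S a)); [exact Hgv|lia]).
  assert (Hsin : ord_ge (fun x => sin (x - p)) p 1)
    by (apply (ord_ge_1_iff _ _ (Can_sin p)); rewrite Rminus_diag; apply sin_0).
  destruct (Can_divides u q Hu Hq) as [c [Hc Hcu]].
  { intros z Hz. exists 2%nat.
    assert (Hcz : cos (z - p) = 1) by (unfold q, versine in Hz; lra).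
    split; [apply ord_eq_scal; [lra|apply versine_ord_eq, Hcz]|].
    destruct (cos_eq_1_int _ Hcz) as [k Hk].
    apply (ord_ge_mult g (fun x => sin (x - p)) z 1 1).
    - apply (ord_ge_1_iff g z HgC). replace z with (p + 2 * PI * IZR k) by lra.
      rewrite (periodic_IZR g (proj2 HgC)). exact Hgp.
    - apply (ord_ge_1_iff _ _ (Can_sin p)), cos_eq_1_sin, Hcz. }
  exists c. split; [exact Hc|]. split.
  - apply (ord_ge_quot c u q p 2 a Hc Hcu).
    + apply ord_eq_scal; [lra|]. apply versine_ord_eq. rewrite Rminus_diag. apply cos_0.
    + replace (2 + a)%nat with (S a + 1)%nat by lia. exact (ord_ge_mult _ _ _ _ _ Hgv Hsin).
  - assert (Hqn : nonzero_fun q).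
    { destruct (versine_nonzero p) as [x0 Hx0]. exists x0. unfold q. lra. }
    intro x. apply Rminus_diag_uniq.
    refine (Can_mult_eq0 (fun x => g x - (sin (x - p) * c x + versine p x * (/ 2 * g x))) q
              _ Hq Hqn _ x).
    + apply Can_minus; [exact HgC|].
      apply Can_plus; [exact (Can_mult _ _ (Can_sin p) Hc)|].
      exact (Can_mult _ _ (Can_versine p) (Can_scal _ _ HgC)).
    + intro y. rewrite Rmult_minus_distr_r, Rmult_plus_distr_r, Rmult_assoc, <- Hcu.
      unfold u, q, versine. assert (Hs := sin2_cos2 (y - p)). unfold Rsqr in Hs.
      transitivity (g y * (1 - (sin (y - p) * sin (y - p) + cos (y - p) * cos (y - p))));
        [field|rewrite Hs; ring].
Qed.

Lemma idpow_mideal p a f : idpow (mideal p) a f <-> Can f /\ ord_ge f p a.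
Proof.
  revert f. induction a as [|a IH]; intro f; simpl.
  - split; [intro H; split; [exact H|apply ord_ge_0, H]|intros [H _]; exact H].
  - split.
    + apply (idmul_ind_closed (mideal p) (idpow (mideal p) a)
               (fun f => Can f /\ ord_ge f p (S a))).
      * intros f1 g1 [Hf1 Hf0] Hg1. apply IH in Hg1. destruct Hg1 as [Hg1 Hg2].
        split; [exact (Can_mult _ _ Hf1 Hg1)|].
        exact (ord_ge_mult f1 g1 p 1 a (proj2 (ord_ge_1_iff f1 p Hf1) Hf0) Hg2).
      * split; [apply Can_const|apply ord_ge_fun0].
      * intros f1 g1 [Hf1 Hf2] [Hg1 Hg2].
        split; [exact (Can_plus _ _ Hf1 Hg1)|exact (ord_ge_plus _ _ _ _ Hf2 Hg2)].
    + intros [HgC Hgv]. destruct (ord_ge_S_decompose f p a HgC Hgv) as [c [Hc [Hcv Heq]]].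
      apply (idmul_two _ _ (fun x => sin (x - p)) c (versine p) (fun x => / 2 * f x) f).
      * split; [apply Can_sin|]. rewrite Rminus_diag. apply sin_0.
      * apply IH. split; assumption.
      * split; [apply Can_versine|]. unfold versine. rewrite Rminus_diag, cos_0. ring.
      * apply IH. split; [exact (Can_scal _ _ HgC)|].
        apply ord_ge_Can_mult; [apply Can_const|]. apply (ord_ge_le f p (S a)); [exact Hgv|lia].
      * exact Heq.
Qed.

Definition prod_versine (L : list (R * nat)) (x : R) : R :=
  fold_right (fun pa acc => versine (fst pa) x ^ snd pa * acc) 1 L.

Lemma Can_prod_versine L : Can (prod_versine L).
Proof.
  induction L as [|pa L IH]; [apply Can_const|].
  exact (Can_mult _ _ (Can_pow _ (snd pa) (Can_versine (fst pa))) IH).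
Qed.

Lemma prod_versine_ord_ge L pa : In pa L -> ord_ge (prod_versine L) (fst pa) (snd pa).
Proof.
  induction L as [|[q b] L IH]; intro Hpa; [destruct Hpa|].
  destruct Hpa as [<-|Hpa]; simpl.
  - apply ord_ge_mult_Can; [apply Can_prod_versine|]. apply ord_ge_pow, versine_ord_ge_1.
  - apply ord_ge_Can_mult; [apply Can_pow, Can_versine|]. apply IH, Hpa.
Qed.

Lemma prod_versine_zero L x : prod_versine L x = 0 -> exists pa, In pa L /\ cos (x - fst pa) = 1.
Proof.
  induction L as [|[q b] L IH]; simpl; intro H; [lra|].
  apply Rmult_integral in H. destruct H as [H|H].
  - exists (q, b). split; [left; reflexivity|]. simpl.
    assert (versine q x = 0) by (apply NNPP; intro h; exact (pow_nonzero _ b h H)).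
    unfold versine in *. lra.
  - destruct (IH H) as [pa [Hpa Hc]]. exists pa. split; [right; exact Hpa|exact Hc].
Qed.

Lemma cos_eq_1_S1pt x p q : S1pt p -> S1pt q -> cos (x - p) = 1 -> cos (x - q) = 1 -> p = q.
Proof.
  intros Hp Hq H1 H2. destruct (cos_eq_1_int _ H1) as [k1 Hk1].
  destruct (cos_eq_1_int _ H2) as [k2 Hk2].
  apply (S1pt_eq_mod p q (k2 - k1)); [exact Hp|exact Hq|]. rewrite minus_IZR. lra.
Qed.

(* With [A = versine p ^ a] and [B] the product of versines over [L], [A^2 + B^2] has no
   zero, and [g = A (A g / (A^2 + B^2)) + B (B g / (A^2 + B^2))]. *)
Lemma ord_ideal_cons_decompose p a L g : S1pt p -> (forall pa, In pa L -> S1pt (fst pa)) ->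
  ~ In p (map fst L) -> ord_ideal ((p, a) :: L) g ->
  idmul (ord_ideal ((p, a) :: nil)) (ord_ideal L) g.
Proof.
  intros Hp HL Hnin [HgC Hgv].
  set (A := fun x => versine p x ^ a). set (B := prod_versine L).
  set (D := fun x => A x * A x + B x * B x).
  assert (HA : Can A) by apply Can_pow, Can_versine.
  assert (HB : Can B) by apply Can_prod_versine.
  assert (HD : Can D) by (apply Can_plus; apply Can_mult; assumption).
  assert (HDn : forall x, D x <> 0).
  { intros x Hx. unfold D in Hx. assert (HAx : A x = 0) by nra. assert (HBx : B x = 0) by nra.
    assert (Hvx : versine p x = 0) by (apply NNPP; intro h; exact (pow_nonzero _ a h HAx)).
    destruct (prod_versine_zero L x HBx) as [[q b] [Hqb Hc]].
    apply Hnin. replace p with q; [exact (in_map fst L (q, b) Hqb)|].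
    apply (cos_eq_1_S1pt x); [exact (HL _ Hqb)|exact Hp|exact Hc|unfold versine in Hvx; lra]. }
  assert (Hmatched : forall u, zeros_matched u D) by (intros u z Hz; exfalso; exact (HDn z Hz)).
  destruct (Can_divides _ D (Can_mult _ _ HA HgC) HD (Hmatched _)) as [c1 [Hc1 Hc1e]].
  destruct (Can_divides _ D (Can_mult _ _ HB HgC) HD (Hmatched _)) as [c2 [Hc2 Hc2e]].
  apply (idmul_two _ _ A c1 c2 B g).
  - apply ord_ideal_single. split; [exact HA|]. apply ord_ge_pow, versine_ord_ge_1.
  - split; [exact Hc1|]. intros [q b] Hqb.
    apply (ord_ge_quot c1 _ D q 0 b Hc1 Hc1e); [apply ord_eq_0; [exact HD|apply HDn]|].
    apply ord_ge_Can_mult; [exact HA|]. exact (Hgv (q, b) (or_intror Hqb)).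
  - apply ord_ideal_single. split; [exact Hc2|].
    apply (ord_ge_quot c2 _ D p 0 a Hc2 Hc2e); [apply ord_eq_0; [exact HD|apply HDn]|].
    apply ord_ge_Can_mult; [exact HB|]. exact (Hgv (p, a) (or_introl eq_refl)).
  - split; [exact HB|]. intros pa Hpa. apply prod_versine_ord_ge, Hpa.
  - intro x. apply Rmult_eq_reg_r with (D x); [|apply HDn].
    transitivity (A x * (c1 x * D x) + B x * (c2 x * D x)); [|ring].
    rewrite <- Hc1e, <- Hc2e. unfold D. ring.
Qed.

Lemma ord_ideal_cons p a L g : S1pt p -> (forall pa, In pa L -> S1pt (fst pa)) ->
  ~ In p (map fst L) ->
  ord_ideal ((p, a) :: L) g <-> idmul (ord_ideal ((p, a) :: nil)) (ord_ideal L) g.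
Proof.
  intros Hp HL Hnin. split; [apply ord_ideal_cons_decompose; assumption|].
  apply idmul_ind_closed; [| apply ord_ideal_fun0 | apply ord_ideal_plus].
  intros f h Hf [HhC Hhv]. apply ord_ideal_single in Hf. destruct Hf as [HfC Hfv].
  split; [exact (Can_mult _ _ HfC HhC)|]. intros pa [<-|Hpa].
  - apply ord_ge_mult_Can; assumption.
  - apply ord_ge_Can_mult; [exact HfC|]. exact (Hhv pa Hpa).
Qed.

Lemma mprod_ord_ideal L : NoDup (map fst L) -> (forall pa, In pa L -> S1pt (fst pa)) ->
  forall g, mprod L g <-> ord_ideal L g.
Proof.
  induction L as [|[p a] L IH]; intros Hnd HL g.
  - split; [intro H; split; [exact H|intros _ []]|intros [H _]; exact H].
  - inversion Hnd as [|? ? Hnin Hnd']; subst.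
    assert (HL' : forall pa, In pa L -> S1pt (fst pa))
      by (intros pa Hpa; apply HL; right; exact Hpa).
    change (mprod ((p, a) :: L) g) with (idmul (idpow (mideal p) a) (mprod L) g).
    rewrite (ord_ideal_cons p a L g (HL (p, a) (or_introl eq_refl)) HL' Hnin).
    split; apply idmul_mono; intros f Hf.
    + apply ord_ideal_single, idpow_mideal, Hf.
    + apply (IH Hnd' HL'), Hf.
    + apply idpow_mideal, ord_ideal_single, Hf.
    + apply (IH Hnd' HL'), Hf.
Qed.

Definition isolating_cover (f : R -> R) (x y : R) : Prop :=
  0 <= x <= 2 * PI /\ exists delta, 0 < delta /\ Rabs (y - x) < delta /\
    forall z, 0 < Rabs (z - x) < delta -> f z <> 0.

Lemma isolating_cover_dom f x : (exists y, isolating_cover f x y) -> 0 <= x <= 2 * PI.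
Proof. intros [y [H _]]. exact H. Qed.

(* Heine-Borel on [0, 2 PI], applied to the punctured neighbourhoods without zeros. *)
Lemma Can_zeros_finite f : Can f -> nonzero_fun f ->
  exists l, forall y, 0 <= y <= 2 * PI -> f y = 0 -> In y l.
Proof.
  intros Hf Hn. assert (HP := PI_RGT_0).
  set (fam := mkfamily (fun x => 0 <= x <= 2 * PI) (isolating_cover f) (isolating_cover_dom f)).
  destruct (compact_P3 0 (2 * PI) fam) as [D [Hcov [l Hl]]].
  { split.
    - intros y Hy. exists y. split; [exact Hy|].
      destruct (Can_isolated_zeros f y Hf Hn) as [d [Hd Hz]]. exists d.
      split; [exact Hd|]. split; [apply Rabs_center_lt, Hd|exact Hz].
    - intros x y [Hx [d [Hd [Hyd Hz]]]].
      assert (Hp : 0 < d - Rabs (y - x)) by lra.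
      exists (mkposreal _ Hp). intros w Hw. unfold disc in Hw. simpl in Hw.
      split; [exact Hx|]. exists d. split; [exact Hd|]. split; [|exact Hz].
      replace (w - x) with ((w - y) + (y - x)) by ring.
      eapply Rle_lt_trans; [apply Rabs_triang|]. lra. }
  exists l. intros y Hy Hy0. destruct (Hcov y Hy) as [x [[Hx [d [Hd [Hyd Hz]]]] HDx]].
  destruct (Req_dec y x) as [->|hne]; [apply Hl; split; assumption|].
  exfalso. apply (Hz y); [|exact Hy0]. split; [apply Rabs_pos_lt; lra|exact Hyd].
Qed.

Lemma exists_NoDup_filter (Q : R -> Prop) (l : list R) :
  exists P, NoDup P /\ forall x, In x P <-> In x l /\ Q x.
Proof.
  set (b := fun x => if excluded_middle_informative (Q x) then true else false).
  exists (nodup Req_EM_T (filter b l)). split; [apply NoDup_nodup|].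
  intro x. rewrite nodup_In, filter_In. unfold b.
  destruct (excluded_middle_informative (Q x)); intuition discriminate.
Qed.

Definition common_zero (I : (R -> R) -> Prop) (x : R) : Prop := forall f, I f -> f x = 0.

Lemma common_zero_periodic I x k : is_ideal I ->
  common_zero I (x + 2 * PI * IZR k) <-> common_zero I x.
Proof.
  intros [HIC _]. split; intros H f Hf; specialize (H f Hf);
    rewrite (periodic_IZR f (proj2 (HIC f Hf))) in *; exact H.
Qed.

Lemma common_zeros_list I f0 : is_ideal I -> I f0 -> nonzero_fun f0 ->
  exists P, NoDup P /\ (forall p, In p P -> S1pt p) /\
    forall x, S1pt x -> (common_zero I x <-> In x P).
Proof.
  intros HI Hf0 Hf0n. destruct HI as [HIC _].
  destruct (Can_zeros_finite f0 (HIC f0 Hf0) Hf0n) as [l Hl].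
  destruct (exists_NoDup_filter (fun x => S1pt x /\ common_zero I x) l) as [P [HP HPl]].
  exists P. split; [exact HP|]. split.
  - intros p Hp. apply HPl, Hp.
  - intros x Hx. rewrite HPl. split; [|tauto]. intro Hz. split; [|split; assumption].
    apply Hl; [unfold S1pt in Hx; lra|exact (Hz f0 Hf0)].
Qed.

(* [Fs] consists of [f0] and, for each zero [x] of [f0] in [[0, 2 PI]], an element of [I]
   not vanishing at [x] if there is one. *)
Lemma finite_zero_test I f0 : is_ideal I -> I f0 -> nonzero_fun f0 ->
  exists Fs, In f0 Fs /\ (forall f, In f Fs -> I f) /\
    forall x, (forall f, In f Fs -> f x = 0) -> common_zero I x.
Proof.
  intros HI Hf0 Hf0n. pose proof HI as [HIC _].
  destruct (Can_zeros_finite f0 (HIC f0 Hf0) Hf0n) as [l Hl].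
  set (Ch := fun x f => I f /\ (f x <> 0 \/ common_zero I x)).
  assert (Hch : forall x, Ch x (epsilon (inhabits f0) (Ch x))).
  { intro x. apply epsilon_spec. destruct (classic (common_zero I x)) as [h|h].
    - exists f0. split; [exact Hf0|right; exact h].
    - apply not_all_ex_not in h. destruct h as [g hg]. apply imply_to_and in hg.
      exists g. split; [apply hg|left; apply hg]. }
  exists (f0 :: map (fun x => epsilon (inhabits f0) (Ch x)) l).
  split; [left; reflexivity|]. split.
  - intros f [<-|Hf]; [exact Hf0|]. apply in_map_iff in Hf. destruct Hf as [x [<- _]]. apply Hch.
  - intros x Hall. destruct (S1_representative x) as [k [y [Hy ->]]].
    apply (common_zero_periodic I y k HI).
    assert (Hper : forall h, I h -> h (y + 2 * PI * IZR k) = h y)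
      by (intros h Hh; apply (periodic_IZR h (proj2 (HIC h Hh)))).
    assert (Hyl : In y l).
    { apply Hl; [unfold S1pt in Hy; lra|].
      rewrite <- (Hper f0 Hf0). apply Hall. left. reflexivity. }
    destruct (Hch y) as [Hchy [Hne|Hcz]]; [exfalso|exact Hcz].
    apply Hne. rewrite <- (Hper _ Hchy). apply Hall. right. apply (in_map (fun x => _) l y Hyl).
Qed.

Fixpoint sumsq (l : list (R -> R)) (x : R) : R :=
  match l with nil => 0 | f :: l' => f x * f x + sumsq l' x end.

Lemma sumsq_nonneg l x : 0 <= sumsq l x.
Proof. induction l as [|f l IH]; simpl; [lra|]. assert (0 <= f x * f x) by nra. lra. Qed.

Lemma sumsq_eq0 l x : sumsq l x = 0 -> forall f, In f l -> f x = 0.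
Proof.
  induction l as [|g l IH]; simpl; intros H f Hf; [destruct Hf|].
  assert (H1 := sumsq_nonneg l x). assert (0 <= g x * g x) by nra.
  destruct Hf as [<-|Hf]; [nra|]. apply IH; [lra|exact Hf].
Qed.

Lemma sumsq_ideal I l : is_ideal I -> (forall f, In f l -> I f) -> I (sumsq l).
Proof.
  intros [HIC [HI0 [HIp HIm]]]. induction l as [|f l IH]; intro Hl; [exact HI0|].
  apply (HIp (fun x => f x * f x) (sumsq l)).
  - apply HIm; [apply HIC|]; apply Hl; left; reflexivity.
  - apply IH. intros g Hg. apply Hl. right. exact Hg.
Qed.

(* No cancellation can occur in a sum of squares, whence the positivity of the factor. *)
Lemma sumsq_factor l p a : (forall f, In f l -> ord_ge f p a) ->
  exists r G, ps_ball G p r /\ (forall x, Rabs (x - p) < r -> 0 <= G x) /\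
    ((exists f, In f l /\ ord_eq f p a) -> 0 < G p) /\
    forall x, Rabs (x - p) < r -> sumsq l x = (x - p) ^ (a + a) * G x.
Proof.
  induction l as [|f l IH]; intro Hl.
  - exists 1, (fun _ => 0). split; [apply ps_ball_const; lra|]. split; [intros; lra|].
    split; [intros [f [[] _]]|intros; simpl; ring].
  - destruct IH as [r2 [G2 [HG2 [Hnn [Hst Heq]]]]]; [intros g Hg; apply Hl; right; exact Hg|].
    assert (HF : exists r1 F, ps_ball F p r1 /\ (ord_eq f p a -> F p <> 0) /\
                   forall x, Rabs (x - p) < r1 -> f x = (x - p) ^ a * F x).
    { destruct (classic (ord_eq f p a)) as [[r1 [F [HF [HF0 Hf1]]]]|Hneq].
      - exists r1, F. auto.
      - destruct (Hl f (or_introl eq_refl)) as [r1 [F [HF Hf1]]]. exists r1, F. tauto. }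
    destruct HF as [r1 [F [HF [HF0 Hf1]]]].
    destruct (ps_ball_common F G2 p r1 r2 HF HG2) as [r [Hr1 [Hr2 [HF' HG2']]]].
    pose proof (ps_ball_pos _ _ _ HF').
    exists r, (fun x => F x * F x + G2 x). split; [|split; [|split]].
    + apply ps_ball_plus; [apply ps_ball_mult|]; assumption.
    + intros x Hx. assert (0 <= G2 x) by (apply Hnn; lra). nra.
    + assert (0 <= G2 p) by (apply Hnn, Rabs_center_lt; lra).
      intros [g [[<-|Hg] Hge]].
      * assert (Hsq : 0 < F p * F p) by (apply Rsqr_pos_lt, HF0, Hge). lra.
      * assert (0 < G2 p) by (apply Hst; exists g; split; assumption). nra.
    + intros x Hx. simpl. rewrite Hf1, Heq, pow_add by lra. ring.
Qed.

Lemma sumsq_ord_eq l p a : (forall f, In f l -> ord_ge f p a) ->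
  (exists f, In f l /\ ord_eq f p a) -> ord_eq (sumsq l) p (a + a).
Proof.
  intros Hl Hex. destruct (sumsq_factor l p a Hl) as [r [G [HG [_ [Hst Heq]]]]].
  exists r, G. split; [exact HG|]. split; [|exact Heq]. specialize (Hst Hex). lra.
Qed.

Lemma ideal_sumsq_combination I g q Gs : is_ideal I ->
  (forall j, In j Gs -> I j /\ exists c, Can c /\ forall x, g x * j x = c x * q x) ->
  exists S, I S /\ forall x, S x * q x = g x * sumsq Gs x.
Proof.
  intros HI. pose proof HI as [HIC [HI0 [HIp HIm]]].
  induction Gs as [|j Gs IH]; intro H.
  - exists (fun _ => 0). split; [exact HI0|]. intros. simpl. ring.
  - destruct IH as [S' [HS' HS'e]]; [intros j' Hj'; apply H; right; exact Hj'|].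
    destruct (H j (or_introl eq_refl)) as [Hj [c [Hc Hce]]].
    exists (fun x => c x * j x + S' x). split; [apply HIp; [apply HIm|]; assumption|].
    intro x. simpl. specialize (HS'e x). specialize (Hce x).
    transitivity (j x * (c x * q x) + S' x * q x); [ring|]. rewrite <- Hce, HS'e. ring.
Qed.

(* If [q = sum j^2] with [j] in [I], and every [g j] is divisible by [q], then
   [g q = sum j (g j) = (sum c_j j) q], so [g = sum c_j j] lies in [I]. *)
Lemma ideal_mem_of_sumsq I Gs g : is_ideal I -> (forall j, In j Gs -> I j) -> Can g ->
  nonzero_fun (sumsq Gs) -> (forall j, In j Gs -> zeros_matched (fun x => g x * j x) (sumsq Gs)) ->
  I g.
Proof.
  intros HI HGs HgC Hqn Hmatch. pose proof HI as [HIC _].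
  assert (HqC : Can (sumsq Gs)) by exact (HIC _ (sumsq_ideal I Gs HI HGs)).
  destruct (ideal_sumsq_combination I g (sumsq Gs) Gs HI) as [S [HS HSe]].
  { intros j Hj. split; [exact (HGs j Hj)|].
    exact (Can_divides _ _ (Can_mult _ _ HgC (HIC j (HGs j Hj))) HqC (Hmatch j Hj)). }
  replace g with S; [exact HS|]. apply functional_extensionality. intro x. apply Rminus_diag_uniq.
  apply (Can_mult_eq0 (fun x => S x - g x) (sumsq Gs) (Can_minus _ _ (HIC S HS) HgC) HqC Hqn).
  intro y. rewrite Rmult_minus_distr_r, HSe. ring.
Qed.

Section IdealStructure.

Variable I : (R -> R) -> Prop.
Hypothesis HI : is_ideal I.
Variable f0 : R -> R.
Hypothesis Hf0 : I f0.
Hypothesis Hf0n : nonzero_fun f0.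

Definition ideal_min_order (p : R) (m : nat) : Prop :=
  (exists f, I f /\ nonzero_fun f /\ ord_eq f p m) /\
  forall f m', I f -> nonzero_fun f -> ord_eq f p m' -> (m <= m')%nat.

Definition ideal_order (p : R) : nat := epsilon (inhabits 0%nat) (ideal_min_order p).

Lemma ideal_order_spec p : ideal_min_order p (ideal_order p).
Proof.
  unfold ideal_order. apply epsilon_spec.
  destruct (Can_ord_eq f0 p (proj1 HI f0 Hf0) Hf0n) as [m0 Hm0].
  destruct (exists_least_nat (fun m => exists f, I f /\ nonzero_fun f /\ ord_eq f p m))
    as [m [Hm Hlt]]; [exists m0, f0; auto|].
  exists m. split; [exact Hm|]. intros f m' Hf Hfn Heo.
  destruct (Nat.le_gt_cases m m') as [h|h]; [exact h|].
  exfalso. apply (Hlt m' h). exists f. auto.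
Qed.

Lemma ideal_ord_ge f p : I f -> ord_ge f p (ideal_order p).
Proof.
  intro Hf. pose proof (proj1 HI f Hf) as HfC.
  destruct (classic (nonzero_fun f)) as [Hfn|Hfn].
  - destruct (Can_ord_eq f p HfC Hfn) as [m Hm].
    apply (ord_ge_le f p m); [exact (ord_eq_ge _ _ _ Hm)|].
    exact (proj2 (ideal_order_spec p) f m Hf Hfn Hm).
  - replace f with (fun _ : R => 0); [apply ord_ge_fun0|].
    apply functional_extensionality. intro x. apply NNPP. intro h. apply Hfn. exists x. auto.
Qed.

Definition order_witness (p : R) : R -> R :=
  epsilon (inhabits f0) (fun f => I f /\ nonzero_fun f /\ ord_eq f p (ideal_order p)).

Lemma order_witness_spec p :
  I (order_witness p) /\ nonzero_fun (order_witness p) /\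
  ord_eq (order_witness p) p (ideal_order p).
Proof. unfold order_witness. apply epsilon_spec, (proj1 (ideal_order_spec p)). Qed.

Variable P : list R.
Hypothesis HPs : forall p, In p P -> S1pt p.
Hypothesis HPz : forall x, S1pt x -> (common_zero I x <-> In x P).
Variable Fs : list (R -> R).
Hypothesis HFs0 : In f0 Fs.
Hypothesis HFsI : forall f, In f Fs -> I f.
Hypothesis HFsz : forall x, (forall f, In f Fs -> f x = 0) -> common_zero I x.

Definition order_list : list (R * nat) := map (fun p => (p, ideal_order p)) P.

Lemma in_order_list pa : In pa order_list <-> In (fst pa) P /\ snd pa = ideal_order (fst pa).
Proof.
  unfold order_list. rewrite in_map_iff. split.
  - intros [p [<- Hp]]. auto.
  - destruct pa as [p a]. simpl. intros [Hp ->]. exists p. auto.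
Qed.

Lemma map_fst_order_list : map fst order_list = P.
Proof. unfold order_list. rewrite map_map. apply map_id. Qed.

Lemma ideal_order_pos p : In p P -> (1 <= ideal_order p)%nat.
Proof.
  intro Hp. destruct (proj1 (ideal_order_spec p)) as [f [Hf [_ Heo]]].
  destruct (ideal_order p); [|lia]. exfalso.
  apply (ord_eq_0_nonzero f p Heo). exact (proj2 (HPz p (HPs p Hp)) Hp f Hf).
Qed.

Lemma ideal_sub_ord_ideal f : I f -> ord_ideal order_list f.
Proof.
  intro Hf. split; [exact (proj1 HI f Hf)|]. intros pa Hpa.
  rewrite (proj2 (proj1 (in_order_list pa) Hpa)). apply ideal_ord_ge, Hf.
Qed.

Let Gs := map order_witness P ++ Fs.

Lemma Gs_ideal j : In j Gs -> I j.
Proof.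
  intro Hj. apply in_app_or in Hj. destruct Hj as [Hj|Hj]; [|exact (HFsI j Hj)].
  apply in_map_iff in Hj. destruct Hj as [p [<- _]]. apply order_witness_spec.
Qed.

Lemma sumsq_Gs_zero z : sumsq Gs z = 0 -> exists y k, In y P /\ z = y + 2 * PI * IZR k.
Proof.
  intro Hz. destruct (S1_representative z) as [k [y [Hy ->]]]. exists y, k.
  split; [|reflexivity]. apply (HPz y Hy), (common_zero_periodic I y k HI), HFsz.
  intros f Hf. apply (sumsq_eq0 Gs _ Hz). apply in_or_app. right. exact Hf.
Qed.

Lemma sumsq_Gs_ord_eq y : In y P -> ord_eq (sumsq Gs) y (ideal_order y + ideal_order y).
Proof.
  intro Hy. apply sumsq_ord_eq.
  - intros f Hf. apply ideal_ord_ge, Gs_ideal, Hf.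
  - exists (order_witness y). split; [|apply order_witness_spec].
    apply in_or_app. left. apply in_map, Hy.
Qed.

Lemma ord_ideal_sub_ideal g : ord_ideal order_list g -> I g.
Proof.
  intros [HgC Hgv].
  assert (HgP : forall y, In y P -> ord_ge g y (ideal_order y))
    by (intros y Hy; apply (Hgv (y, ideal_order y)), in_order_list; auto).
  apply (ideal_mem_of_sumsq I Gs g HI Gs_ideal HgC).
  - destruct Hf0n as [x1 Hx1]. exists x1. intro h. apply Hx1.
    apply (sumsq_eq0 Gs x1 h). apply in_or_app. right. exact HFs0.
  - intros j Hj z Hz. destruct (sumsq_Gs_zero z Hz) as [y [k [Hy ->]]].
    pose proof (proj1 HI _ (sumsq_ideal I Gs HI Gs_ideal)) as HqC.
    pose proof (Can_mult _ _ HgC (proj1 HI j (Gs_ideal j Hj))) as HgjC.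
    exists (ideal_order y + ideal_order y)%nat. split.
    + apply ord_eq_shift; [apply (proj2 HqC)|]. apply sumsq_Gs_ord_eq, Hy.
    + apply ord_ge_shift; [apply (proj2 HgjC)|].
      apply ord_ge_mult; [apply HgP, Hy|apply ideal_ord_ge, Gs_ideal, Hj].
Qed.

End IdealStructure.

Theorem theorem1 (I : (R -> R) -> Prop) :
  is_ideal I ->
  (exists f, I f /\ nonzero_fun f) ->
  (exists g, Can g /\ ~ I g) ->
  exists l : list (R * nat),
    NoDup (map fst l) /\
    (forall pa, In pa l -> S1pt (fst pa) /\ (1 <= snd pa)%nat) /\
    (forall f, I f <-> mprod l f) /\
    (forall x, S1pt x -> ((forall f, I f -> f x = 0) <-> In x (map fst l))) /\
    (forall pa, In pa l ->
       (exists f, I f /\ nonzero_fun f /\ vanish_order f (fst pa) (snd pa)) /\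
       (forall f m, I f -> nonzero_fun f -> vanish_order f (fst pa) m ->
          (snd pa <= m)%nat)).
Proof.
  intros HI [f0 [Hf0 Hf0n]] _.
  destruct (common_zeros_list I f0 HI Hf0 Hf0n) as [P [HPnd [HPs HPz]]].
  destruct (finite_zero_test I f0 HI Hf0 Hf0n) as [Fs [HFs0 [HFsI HFsz]]].
  set (l := order_list I P).
  assert (Hl : forall pa, In pa l -> In (fst pa) P /\ snd pa = ideal_order I (fst pa))
    by (intro pa; apply in_order_list).
  assert (Hfst : map fst l = P) by apply map_fst_order_list.
  exists l. split; [rewrite Hfst; exact HPnd|]. split; [|split; [|split]].
  - intros pa Hpa. destruct (Hl pa Hpa) as [Hp ->].
    split; [exact (HPs _ Hp)|exact (ideal_order_pos I HI f0 Hf0 Hf0n P HPs HPz _ Hp)].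
  - intro f.
    rewrite (mprod_ord_ideal l); [|rewrite Hfst; exact HPnd|intros pa Hpa; apply HPs, Hl, Hpa].
    split; [exact (ideal_sub_ord_ideal I HI f0 Hf0 Hf0n P f)|].
    exact (ord_ideal_sub_ideal I HI f0 Hf0 Hf0n P HPz Fs HFs0 HFsI HFsz f).
  - intros x Hx. rewrite Hfst. exact (HPz x Hx).
  - intros pa Hpa. destruct (Hl pa Hpa) as [_ ->].
    destruct (ideal_order_spec I HI f0 Hf0 Hf0n (fst pa)) as [[f [Hf [Hfn Heo]]] Hmin].
    split; [exists f; rewrite vanish_order_ord_eq; auto|].
    intros g m Hg Hgn Hvo. apply (Hmin g m Hg Hgn), vanish_order_ord_eq, Hvo.
Qed.
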